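(* Let $n\ge 2$, let $g_*$ be the standard metric on $\mathbb{S}^n$, and for $i=1,2$ let $f_i:[a_i,b_i]\to\mathbb{R}^+$ be smooth positive functions. Suppose that (i) the metrics $\gamma_i:=dt^2+f_i(t)^2g_*$ on $[a_i,b_i]\times\mathbb{S}^n$ have positive scalar curvature; (ii) $f_1(b_1)<f_2(a_2)$; (iii) $1>f_1'(b_1)>0$ and $f_1'(b_1)\ge f_2'(a_2)>-1$. Then, after translating the intervals so that $$(a_2-b_1)f_1'(b_1)=f_2(a_2)-f_1(b_1)\quad\text{if } f_1'(b_1)=f_2'(a_2),$$ $$(a_2-b_1)f_1'(b_1)>f_2(a_2)-f_1(b_1)>(a_2-b_1)f_2'(a_2)\quad\text{if } f_1'(b_1)>f_2'(a_2),$$ one can construct a smooth positive function $f:[a_1,b_2]\to\mathbb{R}^+$ such that (I) $f\equiv f_1$ on $[a_1,\frac{a_1+b_1}{2}]$ and $f\equiv f_2$ on $[\frac{a_2+b_2}{2},b_2]$, and (II) $\gamma:=dt^2+f(t)^2g_*$ has positive scalar curvature on $[a_1,b_2]\times\mathbb{S}^n$. Moreover, if $f_i'>0$ on $[a_i,b_i]$ for $i=1,2$, then $f$ can be constructed such that $f'>0$ on $[a_1,b_2]$. *)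

From Stdlib Require Import Reals.
From Coquelicot Require Import Coquelicot.
Open Scope R_scope.

(* f : R -> R is smooth on the closed interval [a,b]: it is (the restriction of)
   a function with derivatives of all orders on an open neighbourhood of [a,b]. *)
Definition smooth_on (a b : R) (f : R -> R) : Prop :=
  exists eps : R, 0 < eps /\
    forall (k : nat) (x : R), a - eps < x < b + eps -> ex_derive_n f k x.

Definition positive_on (a b : R) (f : R -> R) : Prop :=
  forall t, a <= t <= b -> 0 < f t.

(* Scalar curvature at (t, theta) of the warped product metric
   dt^2 + f(t)^2 g_* on an interval times the round sphere S^n
   (standard formula; it does not depend on theta):
   R = -2n f''/f + n(n-1)(1 - f'^2)/f^2. *)
Definition warped_scal (n : nat) (f : R -> R) (t : R) : R :=
  - 2 * INR n * Derive_n f 2 t / f t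
  + INR n * (INR n - 1) * (1 - (Derive f t) ^ 2) / (f t) ^ 2.

Definition psc_on (n : nat) (a b : R) (f : R -> R) : Prop :=
  forall t, a <= t <= b -> 0 < warped_scal n f t.

(* For f > 0 the metric dt^2 + f^2 g_* has positive scalar curvature exactly where
   (n - 1) (1 - f'^2) > 2 f f''.  On the bridge [b1, a2] prescribe

     f'' = phi1 f1'' + phi2 f2'' + P beta1 + Q beta2,

   where the smooth cut-offs phi1 and phi2 are 1 on the side of b1, resp. a2, and vanish
   on [b1 + dl, a2 - dl], and beta1, beta2 are smooth bumps of mass one on either side of
   the point c where the tangent lines of f1 at b1 and of f2 at a2 meet.  Integrating
   twice from the 1-jet of f1 at b1 makes f agree with f1 before b1; the two linear
   conditions f'(a2) = f2'(a2), f(a2) = f2(a2) determine (P, Q), and then f agrees with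
   f2 after a2.  The cut-off terms change f' and f by O(dl), so (P, Q) is O(dl)-close to
   the coefficients (P0, Q0) of the model without them, and P0, Q0 <= 0 because the
   tangent lines form a concave corner.  The model is concave, stays above f1(b1) > 0 and
   has slopes in [f2'(a2), f1'(b1)], inside (-1, 1).  Hence for small dl: f > 0 and
   |f'| < 1 on the bridge, the curvature inequality holds near b1 and a2 by continuity of
   the jets, and in between f'' = P beta1 + Q beta2 = O(dl).  Moreover
   f' >= f2'(a2) - O(dl) on the bridge, which gives the monotone version. *)

From Stdlib Require Import Reals Lra Lia Psatz.
From Coquelicot Require Import Coquelicot.
Open Scope R_scope.
Local Open Scope list_scope.

(** * Smooth functions on intervals *)

Definition smooth_in (l r : R) (f : R -> R) : Prop :=
  forall k x, l < x < r -> ex_derive_n f k x.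

Definition smooth (f : R -> R) : Prop := forall k x, ex_derive_n f k x.

Lemma locally_open_interval (l r x : R) : l < x < r -> locally x (fun y => l < y < r).
Proof. intros Hx. apply (locally_interval _ x (Finite l) (Finite r)); simpl; intros; lra. Qed.

Lemma locally_eq_in (l r : R) (f g : R -> R) (x : R) : l < x < r ->
  (forall y, l < y < r -> f y = g y) -> locally x (fun y => f y = g y).
Proof.
  intros Hx Hfg.
  apply (filter_imp (fun y => l < y < r)); [exact Hfg|now apply locally_open_interval].
Qed.

Lemma Derive_n_S_Derive (f : R -> R) (k : nat) (x : R) :
  Derive_n f (S k) x = Derive_n (Derive f) k x.
Proof. rewrite <- Nat.add_1_r. symmetry. apply (Derive_n_comp f k 1). Qed.

Lemma ex_derive_n_S_of_is_derive (l r : R) (f g : R -> R) (k : nat) :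
  (forall x, l < x < r -> is_derive f x (g x)) ->
  (forall x, l < x < r -> ex_derive_n g k x) ->
  forall x, l < x < r -> ex_derive_n f (S k) x.
Proof.
  intros Hd Hg x Hx. destruct k as [|k].
  - exists (g x). now apply Hd.
  - apply ex_derive_ext with (Derive_n (Derive f) k).
    { intros t. symmetry. apply Derive_n_S_Derive. }
    apply (ex_derive_n_ext_loc g (Derive f) (S k) x); [|now apply Hg].
    apply (locally_eq_in l r); [exact Hx|]. intros y Hy. symmetry. apply is_derive_unique, Hd, Hy.
Qed.

Lemma smooth_in_of_is_derive (l r : R) (f g : R -> R) :
  (forall x, l < x < r -> is_derive f x (g x)) -> smooth_in l r g -> smooth_in l r f.
Proof.
  intros Hd Hg [|k] x Hx; [exact I|].
  apply (ex_derive_n_S_of_is_derive l r f g k Hd); [intros y Hy; now apply Hg|exact Hx].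
Qed.

Lemma smooth_in_Derive (l r : R) (f : R -> R) : smooth_in l r f -> smooth_in l r (Derive f).
Proof.
  intros Hf [|k] x Hx; [exact I|].
  apply ex_derive_ext with (Derive_n f (S k)); [intros; apply Derive_n_S_Derive|].
  exact (Hf (S (S k)) x Hx).
Qed.

Lemma is_derive_of_smooth_in (l r : R) (f : R -> R) (x : R) :
  smooth_in l r f -> l < x < r -> is_derive f x (Derive f x).
Proof. intros Hf Hx. apply Derive_correct. exact (Hf 1%nat x Hx). Qed.

Lemma continuous_of_smooth_in (l r : R) (f : R -> R) (x : R) :
  smooth_in l r f -> l < x < r -> continuous f x.
Proof.
  intros Hf Hx. apply (ex_derive_continuous (K := R_AbsRing) (V := R_NormedModule)).
  exact (Hf 1%nat x Hx).
Qed.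

Lemma continuous_Derive2_of_smooth_in (l r : R) (f : R -> R) (x : R) :
  smooth_in l r f -> l < x < r -> continuous (Derive_n f 2) x.
Proof.
  intros Hf Hx. apply (continuous_of_smooth_in l r); [|exact Hx].
  now apply smooth_in_Derive, smooth_in_Derive.
Qed.

Lemma smooth_in_ext (l r : R) (f g : R -> R) :
  (forall x, l < x < r -> f x = g x) -> smooth_in l r f -> smooth_in l r g.
Proof.
  intros Hfg Hf k x Hx.
  apply ex_derive_n_ext_loc with f; [now apply (locally_eq_in l r)|now apply Hf].
Qed.

Lemma smooth_in_const (l r c : R) : smooth_in l r (fun _ => c).
Proof. intros k x _. apply ex_derive_n_const. Qed.

Lemma smooth_in_scal (l r c : R) (f : R -> R) : smooth_in l r f -> smooth_in l r (fun x => c * f x).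
Proof. intros Hf k x Hx. apply ex_derive_n_scal_l, Hf, Hx. Qed.

Lemma smooth_in_plus (l r : R) (f g : R -> R) :
  smooth_in l r f -> smooth_in l r g -> smooth_in l r (fun x => f x + g x).
Proof.
  intros Hf Hg k x Hx.
  apply ex_derive_n_plus;
    (apply (filter_imp (fun y => l < y < r)); [|now apply locally_open_interval]);
    intros y Hy j _; [apply Hf|apply Hg]; exact Hy.
Qed.

Lemma smooth_in_mult (l r : R) (f g : R -> R) :
  smooth_in l r f -> smooth_in l r g -> smooth_in l r (fun x => f x * g x).
Proof.
  (* (f g)' = f' g + f g', so induct on the order for all pairs at once *)
  enough (H : forall k f g, smooth_in l r f -> smooth_in l r g ->
    forall j x, (j <= k)%nat -> l < x < r -> ex_derive_n (fun x => f x * g x) j x).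
  { intros Hf Hg k x Hx. exact (H k f g Hf Hg k x (le_n k) Hx). }
  induction k as [|k IH]; intros f' g' Hf Hg [|j] x Hj Hx; try exact I; [lia|].
  apply (ex_derive_n_S_of_is_derive l r _ (fun y => Derive f' y * g' y + f' y * Derive g' y));
    [|intros y Hy|exact Hx].
  - intros y Hy. apply (is_derive_mult f' g').
    + exact (is_derive_of_smooth_in l r f' y Hf Hy).
    + exact (is_derive_of_smooth_in l r g' y Hg Hy).
    + intros; apply Rmult_comm.
  - apply ex_derive_n_plus;
      (apply (filter_imp (fun y => l < y < r)); [|now apply locally_open_interval]);
      intros z Hz i Hi.
    + apply IH; [apply smooth_in_Derive, Hf|exact Hg|lia|exact Hz].
    + apply IH; [exact Hf|apply smooth_in_Derive, Hg|lia|exact Hz].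
Qed.

Lemma smooth_in_of_smooth (l r : R) (f : R -> R) : smooth f -> smooth_in l r f.
Proof. intros Hf k x _. apply Hf. Qed.

Lemma smooth_of_smooth_in (f : R -> R) : (forall l r, smooth_in l r f) -> smooth f.
Proof. intros Hf k x. apply (Hf (x - 1) (x + 1)). lra. Qed.

Lemma smooth_in_mult_vanishing_right (l m r hi : R) (phi g : R -> R) :
  smooth phi -> smooth_in l r g -> m < r -> (forall s, m <= s -> phi s = 0) ->
  smooth_in l hi (fun s => phi s * g s).
Proof.
  intros Hphi Hg Hm Hz k x Hx. destruct (Rlt_dec x r) as [Hxr|Hxr].
  - apply (smooth_in_mult l r); [apply smooth_in_of_smooth, Hphi|exact Hg|lra].
  - apply ex_derive_n_ext_loc with (fun _ => 0); [|apply ex_derive_n_const].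
    apply (locally_eq_in m (x + 1)); [lra|]. intros y Hy. rewrite Hz by lra. ring.
Qed.

Lemma smooth_in_mult_vanishing_left (lo l m r : R) (phi g : R -> R) :
  smooth phi -> smooth_in l r g -> l < m -> (forall s, s <= m -> phi s = 0) ->
  smooth_in lo r (fun s => phi s * g s).
Proof.
  intros Hphi Hg Hm Hz k x Hx. destruct (Rlt_dec l x) as [Hxl|Hxl].
  - apply (smooth_in_mult l r); [apply smooth_in_of_smooth, Hphi|exact Hg|lra].
  - apply ex_derive_n_ext_loc with (fun _ => 0); [|apply ex_derive_n_const].
    apply (locally_eq_in (x - 1) m); [lra|]. intros y Hy. rewrite Hz by lra. ring.
Qed.

Lemma smooth_comp_affine (f : R -> R) (a b : R) : smooth f -> smooth (fun y => f (a * y + b)).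
Proof.
  intros Hf k x.
  apply (ex_derive_n_comp_scal (fun z => f (z + b))).
  apply filter_forall. intros z j _. apply ex_derive_n_comp_trans, Hf.
Qed.

Lemma is_derive_comp_affine (f : R -> R) (a b x l : R) :
  is_derive f (a * x + b) l -> is_derive (fun y => f (a * y + b)) x (a * l).
Proof.
  intros Hf.
  assert (Ha : is_derive (fun y => a * y + b) x a) by (auto_derive; [exact I|ring]).
  exact (is_derive_comp f _ x l a Hf Ha).
Qed.

Lemma is_derive_RInt_in (g : R -> R) (a l r x : R) : l < a < r ->
  (forall z, l < z < r -> continuous g z) -> l < x < r ->
  is_derive (fun t => RInt g a t) x (g x).
Proof.
  intros Ha Hg Hx. apply (is_derive_RInt g _ a x); [|now apply Hg].
  apply (filter_imp (fun y => l < y < r)); [|now apply locally_open_interval].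
  intros b Hb. apply (RInt_correct (V := R_CompleteNormedModule)).
  apply (ex_RInt_continuous (V := R_CompleteNormedModule)). intros z Hz. apply Hg.
  pose proof (Rmin_glb_lt a b l). pose proof (Rmax_lub_lt a b r). lra.
Qed.

Lemma is_derive_RInt_smooth (g : R -> R) (a x : R) : smooth g ->
  is_derive (fun t => RInt g a t) x (g x).
Proof.
  intros Hg. apply (is_derive_RInt_in g a (Rmin a x - 1) (Rmax a x + 1));
    [pose proof (Rmin_l a x); pose proof (Rmax_l a x); lra| |
     pose proof (Rmin_r a x); pose proof (Rmax_r a x); lra].
  intros z _. apply (continuous_of_smooth_in (z - 1) (z + 1)); [now apply smooth_in_of_smooth|lra].
Qed.

Lemma smooth_RInt (g : R -> R) (a : R) : smooth g -> smooth (fun t => RInt g a t).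
Proof.
  intros Hg. apply smooth_of_smooth_in. intros l r.
  apply smooth_in_of_is_derive with g; [|now apply smooth_in_of_smooth].
  intros x _. now apply is_derive_RInt_smooth.
Qed.

(** * Mean value estimates *)

Lemma MVT_bounds (g dg : R -> R) (a b lo hi : R) : a <= b ->
  (forall x, a <= x <= b -> is_derive g x (dg x)) ->
  (forall x, a <= x <= b -> lo <= dg x <= hi) ->
  lo * (b - a) <= g b - g a <= hi * (b - a).
Proof.
  intros Hab Hd Hb.
  destruct (MVT_gen g a b dg) as [c [Hc ->]];
    rewrite ?Rmin_left, ?Rmax_right in * by lra.
  - intros x Hx. apply Hd. lra.
  - intros x Hx.
    apply continuity_pt_filterlim, (ex_derive_continuous (K := R_AbsRing) (V := R_NormedModule)).
    exists (dg x). apply Hd. lra.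
  - specialize (Hb c Hc). split; apply Rmult_le_compat_r; lra.
Qed.

Lemma eq_of_is_derive_zero (g dg : R -> R) (a b : R) : a <= b ->
  (forall x, a <= x <= b -> is_derive g x (dg x)) ->
  (forall x, a <= x <= b -> dg x = 0) -> g b = g a.
Proof.
  intros Hab Hd Hz.
  assert (H : 0 * (b - a) <= g b - g a <= 0 * (b - a)).
  { apply (MVT_bounds g dg a b 0 0 Hab Hd). intros x Hx. rewrite Hz by exact Hx. lra. }
  lra.
Qed.

Lemma is_derive_diff_const (f g df dg : R -> R) (a b : R) : a <= b ->
  (forall x, a <= x <= b -> is_derive f x (df x)) ->
  (forall x, a <= x <= b -> is_derive g x (dg x)) ->
  (forall x, a <= x <= b -> df x = dg x) -> f b - g b = f a - g a.
Proof.
  intros Hab Hf Hg Heq.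
  apply (eq_of_is_derive_zero (fun x => f x - g x) (fun x => df x - dg x) a b Hab).
  - intros x Hx. apply (is_derive_minus f g x); [apply Hf|apply Hg]; exact Hx.
  - intros x Hx. rewrite Heq by exact Hx. ring.
Qed.

Lemma eq_of_eq_second_derive (f g df dg d2f d2g : R -> R) (a b x0 t : R) :
  a <= x0 <= b -> a <= t <= b ->
  (forall x, a <= x <= b -> is_derive f x (df x) /\ is_derive df x (d2f x)) ->
  (forall x, a <= x <= b -> is_derive g x (dg x) /\ is_derive dg x (d2g x)) ->
  (forall x, a <= x <= b -> d2f x = d2g x) -> df x0 = dg x0 -> f x0 = g x0 -> f t = g t.
Proof.
  intros Hx0 Ht Hf Hg Hd2 Hd1 H0.
  assert (Hd : forall x, a <= x <= b -> df x = dg x).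
  { intros x Hx.
    assert (E : forall y, a <= y <= b -> df y - dg y = df a - dg a).
    { intros y Hy. apply (is_derive_diff_const df dg d2f d2g); [lra|..];
        intros z Hz; [apply Hf|apply Hg|apply Hd2]; lra. }
    pose proof (E x Hx). pose proof (E x0 Hx0). lra. }
  assert (E : forall y, a <= y <= b -> f y - g y = f a - g a).
  { intros y Hy. apply (is_derive_diff_const f g df dg); [lra|..];
      intros z Hz; [apply Hf|apply Hg|apply Hd]; lra. }
  pose proof (E t Ht). pose proof (E x0 Hx0). lra.
Qed.

Lemma MVT_abs_bound (g dg : R -> R) (a b K : R) : a <= b ->
  (forall x, a <= x <= b -> is_derive g x (dg x)) ->
  (forall x, a <= x <= b -> Rabs (dg x) <= K) -> Rabs (g b - g a) <= K * (b - a).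
Proof.
  intros Hab Hd Hb.
  assert (H : - K * (b - a) <= g b - g a <= K * (b - a)).
  { apply (MVT_bounds g dg a b _ _ Hab Hd). intros x Hx. apply Rabs_le_between, Hb, Hx. }
  apply Rabs_le_between. lra.
Qed.

Lemma ge_of_nonincreasing_derive (g dg : R -> R) (a b t m : R) : a <= t <= b ->
  (forall x, a <= x <= b -> is_derive g x (dg x)) ->
  (forall x y, a <= x <= y -> y <= b -> dg y <= dg x) ->
  m <= g a -> m <= g b -> m <= g t.
Proof.
  intros Ht Hd Hdec Ha Hb. destruct (Rle_dec 0 (dg t)) as [Hpos|Hneg].
  - assert (H : dg t * (t - a) <= g t - g a <= dg a * (t - a)).
    { apply (MVT_bounds g dg); [lra|intros; apply Hd; lra|intros x Hx; split; apply Hdec; lra]. }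
    assert (0 <= dg t * (t - a)) by (apply Rmult_le_pos; lra). lra.
  - assert (H : dg b * (b - t) <= g b - g t <= dg t * (b - t)).
    { apply (MVT_bounds g dg); [lra|intros; apply Hd; lra|intros x Hx; split; apply Hdec; lra]. }
    assert (dg t * (b - t) <= 0) by (apply Rmult_le_0_r; lra). lra.
Qed.

(** * A smooth step function *)

Fixpoint poly_eval (p : list R) (y : R) : R :=
  match p with nil => 0 | a :: q => a + y * poly_eval q y end.

Fixpoint poly_add (p q : list R) : list R :=
  match p, q with
  | nil, _ => q
  | _, nil => p
  | a :: p', b :: q' => (a + b) :: poly_add p' q'
  end.

Fixpoint poly_deriv (p : list R) : list R :=
  match p with nil => nil | a :: q => poly_add q (0 :: poly_deriv q) end.

Fixpoint poly_norm (p : list R) : R :=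
  match p with nil => 0 | a :: q => Rabs a + poly_norm q end.

Lemma poly_eval_add (p q : list R) (y : R) :
  poly_eval (poly_add p q) y = poly_eval p y + poly_eval q y.
Proof.
  revert q; induction p as [|a p IH]; intros [|b q]; simpl; try ring.
  rewrite IH. ring.
Qed.

Lemma poly_eval_opp (p : list R) (y : R) : poly_eval (List.map Ropp p) y = - poly_eval p y.
Proof. induction p as [|a p IH]; simpl; [ring|]. rewrite IH. ring. Qed.

Lemma is_derive_poly_eval (p : list R) (y : R) :
  is_derive (poly_eval p) y (poly_eval (poly_deriv p) y).
Proof.
  induction p as [|a p IH]; simpl; [exact (is_derive_const 0 y)|].
  assert (H := is_derive_plus _ _ y _ _ (is_derive_const a y)
    (is_derive_mult (fun t => t) (poly_eval p) y _ _ (is_derive_id y) IH Rmult_comm)).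
  unfold plus in H; simpl in H.
  rewrite poly_eval_add. simpl.
  replace (poly_eval p y + (0 + y * poly_eval (poly_deriv p) y))
    with (0 + (1 * poly_eval p y + y * poly_eval (poly_deriv p) y)) by ring.
  exact H.
Qed.

Lemma poly_norm_ge0 (p : list R) : 0 <= poly_norm p.
Proof. induction p as [|a p IH]; simpl; [lra|]. pose proof (Rabs_pos a). lra. Qed.

Lemma poly_eval_bound (p : list R) (y : R) : 1 <= y ->
  Rabs (poly_eval p y) <= poly_norm p * y ^ length p.
Proof.
  intros Hy. induction p as [|a p IH]; simpl; [rewrite Rabs_R0; lra|].
  assert (H1 : 1 <= y ^ length p) by (apply pow_R1_Rle; lra).
  pose proof (Rabs_pos a). pose proof (poly_norm_ge0 p).
  eapply Rle_trans; [apply Rabs_triang|]. rewrite Rabs_mult, (Rabs_right y) by lra.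
  assert (y * Rabs (poly_eval p y) <= y * (poly_norm p * y ^ length p))
    by (apply Rmult_le_compat_l; lra).
  assert (1 <= y * y ^ length p) by nra.
  assert (Rabs a <= Rabs a * (y * y ^ length p)) by nra.
  lra.
Qed.

Lemma pow_mul_exp_neg_le (m : nat) (y : R) : 0 < y ->
  y ^ m * exp (- y) <= INR (Factorial.fact (S m)) / y.
Proof.
  intros Hy. pose proof (exp_ge_taylor y (S m) (Rlt_le _ _ Hy)) as Htaylor.
  rewrite tech5 in Htaylor.
  assert (0 <= sum_f_R0 (fun k => y ^ k / INR (Factorial.fact k)) m).
  { apply cond_pos_sum. intros k. apply Rdiv_le_0_compat; [apply pow_le; lra|apply INR_fact_lt_0]. }
  assert (Hfact : 0 < INR (Factorial.fact (S m))) by apply INR_fact_lt_0.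
  rewrite exp_Ropp. pose proof (exp_pos y).
  apply (Rmult_le_reg_r (y * exp y)); [nra|].
  replace (y ^ m * / exp y * (y * exp y)) with (y ^ S m) by (simpl; field; lra).
  replace (INR (Factorial.fact (S m)) / y * (y * exp y))
    with (INR (Factorial.fact (S m)) * exp y) by (field; lra).
  apply (Rmult_le_reg_r (/ INR (Factorial.fact (S m)))); [now apply Rinv_0_lt_compat|].
  replace (INR (Factorial.fact (S m)) * exp y * / INR (Factorial.fact (S m)))
    with (exp y) by (field; lra).
  lra.
Qed.

Lemma is_derive_zero_of_quadratic_bound (f : R -> R) (K : R) : f 0 = 0 ->
  (forall h, Rabs h <= 1 -> Rabs (f h) <= K * h ^ 2) -> is_derive f 0 0.
Proof.
  intros H0 Hf. apply is_derive_Reals. intros eps Heps.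
  assert (HK : 0 <= K)
    by (specialize (Hf 1); rewrite Rabs_R1 in Hf; pose proof (Rabs_pos (f 1)); nra).
  assert (Hd : 0 < Rmin 1 (eps / (K + 1)))
    by (apply Rmin_glb_lt; [lra|apply Rdiv_lt_0_compat; lra]).
  exists (mkposreal _ Hd). intros h Hh Hhd. simpl in Hhd.
  pose proof (Rmin_l 1 (eps / (K + 1))). pose proof (Rmin_r 1 (eps / (K + 1))).
  rewrite Rplus_0_l, H0, Rminus_0_r, Rminus_0_r.
  specialize (Hf h ltac:(lra)). rewrite <- (pow2_abs h) in Hf.
  assert (Hh0 : 0 < Rabs h) by (apply Rabs_pos_lt; exact Hh).
  unfold Rdiv. rewrite Rabs_mult, Rabs_inv.
  apply (Rmult_lt_reg_r (Rabs h)); [exact Hh0|].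
  rewrite Rmult_assoc, Rinv_l, Rmult_1_r by lra.
  assert (K * Rabs h < eps).
  { assert (K * Rabs h <= K * (eps / (K + 1))) by (apply Rmult_le_compat_l; lra).
    assert (K * (eps / (K + 1)) = eps - eps / (K + 1)) by (field; lra).
    assert (0 < eps / (K + 1)) by (apply Rdiv_lt_0_compat; lra).
    lra. }
  nra.
Qed.

Definition flat (p : list R) (x : R) : R :=
  if Rlt_dec 0 x then poly_eval p (/ x) * exp (- / x) else 0.

(* d/dx [p(1/x) e^(-1/x)] = q(1/x) e^(-1/x) with q(y) = y^2 (p(y) - p'(y)) *)
Definition flat_deriv_poly (p : list R) : list R :=
  0 :: 0 :: poly_add p (List.map Ropp (poly_deriv p)).

Lemma flat_quadratic_bound (p : list R) (x : R) : Rabs x <= 1 ->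
  Rabs (flat p x) <= poly_norm p * INR (Factorial.fact (S (S (length p)))) * x ^ 2.
Proof.
  intros Hx. pose proof (poly_norm_ge0 p) as HN.
  pose proof (INR_fact_lt_0 (S (S (length p)))) as Hfact.
  unfold flat. destruct (Rlt_dec 0 x) as [Hpos|_].
  2: { rewrite Rabs_R0. pose proof (pow2_ge_0 x). apply Rmult_le_pos; [nra|lra]. }
  rewrite Rabs_right in Hx by lra.
  set (y := / x).
  assert (Hy1 : 1 <= y) by (unfold y; rewrite <- Rinv_1; apply Rinv_le_contravar; lra).
  assert (Hxy : x * y = 1) by (unfold y; field; lra).
  pose proof (poly_eval_bound p y Hy1) as Hq.
  pose proof (pow_mul_exp_neg_le (S (length p)) y ltac:(lra)) as He.
  replace (INR (Factorial.fact (S (S (length p)))) / y)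
    with (INR (Factorial.fact (S (S (length p)))) * x) in He by (unfold y; field; lra).
  clearbody y.
  pose proof (exp_pos (- y)). pose proof (pow_le y (length p) ltac:(lra)).
  rewrite Rabs_mult, (Rabs_right (exp _)) by lra. simpl in He.
  apply Rle_trans with (poly_norm p * y ^ length p * exp (- y)); [apply Rmult_le_compat_r; lra|].
  replace (poly_norm p * y ^ length p * exp (- y))
    with (poly_norm p * x * (y * y ^ length p * exp (- y)))
    by (transitivity (poly_norm p * (x * y) * y ^ length p * exp (- y)); [ring|rewrite Hxy; ring]).
  apply Rle_trans with (poly_norm p * x * (INR (Factorial.fact (S (S (length p)))) * x));
    [apply Rmult_le_compat_l; [apply Rmult_le_pos; lra|exact He]|right; ring].
Qed.

Lemma is_derive_flat (p : list R) (x : R) : is_derive (flat p) x (flat (flat_deriv_poly p) x).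
Proof.
  destruct (Rtotal_order x 0) as [Hneg|[->|Hpos]].
  - apply is_derive_ext_loc with (fun _ => 0).
    + apply (locally_eq_in (x - 1) 0); [lra|].
      intros y Hy. unfold flat. destruct (Rlt_dec 0 y); [lra|reflexivity].
    + unfold flat. destruct (Rlt_dec 0 x); [lra|]. exact (is_derive_const 0 x).
  - unfold flat at 2. destruct (Rlt_dec 0 0); [lra|].
    apply (is_derive_zero_of_quadratic_bound (flat p)
      (poly_norm p * INR (Factorial.fact (S (S (length p)))))); [|apply flat_quadratic_bound].
    unfold flat. destruct (Rlt_dec 0 0); [lra|reflexivity].
  - apply is_derive_ext_loc with (fun t => poly_eval p (/ t) * exp (- / t)).
    + apply (locally_eq_in 0 (x + 1)); [lra|].
      intros y Hy. unfold flat. destruct (Rlt_dec 0 y); [reflexivity|lra].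
    + assert (Hinv : is_derive (fun t => / t) x (- 1 / x ^ 2)).
      { apply (is_derive_inv (fun t => t) x 1); [exact (is_derive_id x)|lra]. }
      assert (H := is_derive_mult _ _ x _ _
        (is_derive_comp (poly_eval p) (fun t => / t) x _ _ (is_derive_poly_eval p (/ x)) Hinv)
        (is_derive_comp exp (fun t => - / t) x _ _ (is_derive_exp (- / x))
           (is_derive_opp (fun t => / t) x _ Hinv)) Rmult_comm).
      unfold flat, flat_deriv_poly. destruct (Rlt_dec 0 x); [|lra].
      simpl poly_eval. rewrite poly_eval_add, poly_eval_opp.
      match goal with |- is_derive _ _ ?l => match type of H with is_derive _ _ ?l' =>
        replace l with l'; [exact H|]
      end end.
      symmetry. unfold plus, scal, mult, opp; simpl; unfold mult; simpl. field. lra.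
Qed.

Lemma smooth_flat (p : list R) : smooth (flat p).
Proof.
  intros k. revert p. induction k as [|k IH]; intros p x; [exact I|].
  apply (ex_derive_n_S_of_is_derive (x - 1) (x + 1) _ (flat (flat_deriv_poly p)));
    [intros; apply is_derive_flat|intros; apply IH|lra].
Qed.

Definition flat_exp : R -> R := flat (1 :: nil).

Lemma flat_exp_pos (x : R) : 0 < x -> flat_exp x = exp (- / x).
Proof. intros Hx. unfold flat_exp, flat. destruct (Rlt_dec 0 x); [simpl; ring|lra]. Qed.

Lemma flat_exp_nonpos (x : R) : x <= 0 -> flat_exp x = 0.
Proof. intros Hx. unfold flat_exp, flat. destruct (Rlt_dec 0 x); [lra|reflexivity]. Qed.

Lemma flat_exp_bounds (x : R) : 0 <= flat_exp x <= 1.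
Proof.
  destruct (Rlt_dec 0 x) as [Hx|Hx]; [|rewrite flat_exp_nonpos; lra].
  rewrite flat_exp_pos by exact Hx. pose proof (exp_pos (- / x)).
  rewrite <- exp_0. split; [lra|]. left. apply exp_increasing.
  pose proof (Rinv_0_lt_compat x Hx). lra.
Qed.

Definition bump (u : R) : R := flat_exp u * flat_exp (1 - u).

Lemma smooth_bump : smooth bump.
Proof.
  apply smooth_of_smooth_in. intros l r. apply smooth_in_mult.
  - apply smooth_in_of_smooth, smooth_flat.
  - apply smooth_in_ext with (fun u => flat_exp ((-1) * u + 1)); [intros; f_equal; ring|].
    apply smooth_in_of_smooth, smooth_comp_affine, smooth_flat.
Qed.

Lemma bump_bounds (u : R) : 0 <= bump u <= 1.
Proof. unfold bump. pose proof (flat_exp_bounds u). pose proof (flat_exp_bounds (1 - u)). nra. Qed.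

Lemma bump_out (u : R) : u <= 0 \/ 1 <= u -> bump u = 0.
Proof.
  unfold bump. intros [Hu|Hu]; [rewrite (flat_exp_nonpos u)|rewrite (flat_exp_nonpos (1 - u))];
    lra || ring.
Qed.

Lemma bump_pos (u : R) : 0 < u < 1 -> 0 < bump u.
Proof.
  intros Hu. unfold bump. rewrite !flat_exp_pos by lra.
  apply Rmult_lt_0_compat; apply exp_pos.
Qed.

Lemma continuous_bump (u : R) : continuous bump u.
Proof.
  apply (continuous_of_smooth_in (u - 1) (u + 1)); [apply smooth_in_of_smooth, smooth_bump|lra].
Qed.

Definition bump_mass : R := RInt bump 0 1.

Lemma bump_mass_pos : 0 < bump_mass.
Proof. apply RInt_gt_0; [lra|apply bump_pos|intros; apply continuous_bump]. Qed.

Definition step (x : R) : R := RInt bump 0 x / bump_mass.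

Lemma is_derive_step (x : R) : is_derive step x (bump x / bump_mass).
Proof.
  apply (is_derive_ext (V := R_NormedModule) (fun t => / bump_mass * RInt bump 0 t));
    [intros t; unfold step, Rdiv; simpl; ring|].
  replace (bump x / bump_mass) with (/ bump_mass * bump x) by (unfold Rdiv; ring).
  apply is_derive_scal, is_derive_RInt_smooth, smooth_bump.
Qed.

Lemma smooth_step : smooth step.
Proof.
  apply smooth_of_smooth_in. intros l r.
  apply smooth_in_of_is_derive with (fun x => / bump_mass * bump x).
  - intros x _. rewrite Rmult_comm. apply is_derive_step.
  - apply smooth_in_scal, smooth_in_of_smooth, smooth_bump.
Qed.

Lemma step_le (x y : R) : x <= y -> step x <= step y.
Proof.
  intros Hxy. pose proof bump_mass_pos.
  assert (Hd : forall z, x <= z <= y -> 0 <= bump z / bump_mass <= / bump_mass).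
  { intros z _. pose proof (bump_bounds z). unfold Rdiv. split.
    - apply Rmult_le_pos; [lra|left; now apply Rinv_0_lt_compat].
    - rewrite <- (Rmult_1_l (/ bump_mass)) at 2.
      apply Rmult_le_compat_r; [left; now apply Rinv_0_lt_compat|lra]. }
  pose proof (MVT_bounds step _ x y _ _ Hxy (fun z _ => is_derive_step z) Hd). nra.
Qed.

Lemma step_nonpos (x : R) : x <= 0 -> step x = 0.
Proof.
  intros Hx. unfold step.
  assert (H0 : RInt bump 0 0 = 0) by exact (RInt_point (V := R_CompleteNormedModule) 0 bump).
  rewrite <- (eq_of_is_derive_zero (fun t => RInt bump 0 t) bump x 0 Hx), H0;
    [unfold Rdiv; ring| |].
  - intros; apply is_derive_RInt_smooth, smooth_bump.
  - intros z Hz. apply bump_out. lra.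
Qed.

Lemma step_ge1 (x : R) : 1 <= x -> step x = 1.
Proof.
  intros Hx. unfold step.
  rewrite (eq_of_is_derive_zero (fun t => RInt bump 0 t) bump 1 x Hx).
  - fold bump_mass. field. apply Rgt_not_eq, bump_mass_pos.
  - intros; apply is_derive_RInt_smooth, smooth_bump.
  - intros z Hz. apply bump_out. lra.
Qed.

Lemma step_bounds (x : R) : 0 <= step x <= 1.
Proof.
  rewrite <- (step_nonpos (Rmin x 0)), <- (step_ge1 (Rmax x 1)) by
    (apply Rmin_r || apply Rmax_r).
  split; apply step_le; [apply Rmin_l|apply Rmax_l].
Qed.

Section Ramp.
Variables (p w : R).
Hypothesis Hw : 0 < w.

Definition ramp (t : R) : R := step ((t - p) / w).
Definition ramp_slope (t : R) : R := bump ((t - p) / w) / (bump_mass * w).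
Definition ramp_int (t : R) : R := RInt ramp p t.

Lemma ramp_arg_affine (t : R) : (t - p) / w = / w * t + - p / w.
Proof. field. lra. Qed.

Lemma is_derive_ramp (t : R) : is_derive ramp t (ramp_slope t).
Proof.
  apply (is_derive_ext (V := R_NormedModule) (fun s => step (/ w * s + - p / w)));
    [intros s; unfold ramp; now rewrite ramp_arg_affine|].
  replace (ramp_slope t) with (/ w * (bump (/ w * t + - p / w) / bump_mass)).
  - apply is_derive_comp_affine, is_derive_step.
  - unfold ramp_slope. rewrite ramp_arg_affine. field.
    split; [lra|apply Rgt_not_eq, bump_mass_pos].
Qed.

Lemma smooth_ramp : smooth ramp.
Proof.
  apply smooth_of_smooth_in. intros l r.
  apply smooth_in_ext with (fun t => step (/ w * t + - p / w)).
  - intros t _. unfold ramp. now rewrite ramp_arg_affine.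
  - apply smooth_in_of_smooth, smooth_comp_affine, smooth_step.
Qed.

Lemma ramp_low (t : R) : t <= p -> ramp t = 0.
Proof. intros Ht. apply step_nonpos. apply Rle_div_l; lra. Qed.

Lemma ramp_high (t : R) : p + w <= t -> ramp t = 1.
Proof. intros Ht. apply step_ge1. apply Rle_div_r; lra. Qed.

Lemma ramp_bounds (t : R) : 0 <= ramp t <= 1.
Proof. apply step_bounds. Qed.

Lemma ramp_le (x y : R) : x <= y -> ramp x <= ramp y.
Proof.
  intros Hxy. apply step_le. unfold Rdiv.
  apply Rmult_le_compat_r; [left; apply Rinv_0_lt_compat|]; lra.
Qed.

Lemma ramp_slope_out (t : R) : t <= p \/ p + w <= t -> ramp_slope t = 0.
Proof.
  intros Ht. unfold ramp_slope. rewrite bump_out; [unfold Rdiv; ring|].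
  destruct Ht; [left; apply Rle_div_l|right; apply Rle_div_r]; lra.
Qed.

Lemma ramp_slope_bounds (t : R) : 0 <= ramp_slope t <= / (bump_mass * w).
Proof.
  unfold ramp_slope. pose proof (bump_bounds ((t - p) / w)). pose proof bump_mass_pos.
  assert (0 < / (bump_mass * w)) by (apply Rinv_0_lt_compat, Rmult_lt_0_compat; lra).
  unfold Rdiv. split; [apply Rmult_le_pos|rewrite <- (Rmult_1_l (/ (bump_mass * w))) at 2;
    apply Rmult_le_compat_r]; lra.
Qed.

Lemma is_derive_ramp_int (t : R) : is_derive ramp_int t (ramp t).
Proof. apply is_derive_RInt_smooth, smooth_ramp. Qed.

Lemma smooth_ramp_int : smooth ramp_int.
Proof. apply smooth_RInt, smooth_ramp. Qed.

Lemma ramp_int_low (t : R) : t <= p -> ramp_int t = 0.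
Proof.
  intros Ht. unfold ramp_int.
  assert (H0 : RInt ramp p p = 0) by exact (RInt_point (V := R_CompleteNormedModule) p ramp).
  rewrite <- H0. symmetry. apply (eq_of_is_derive_zero (fun s => RInt ramp p s) ramp t p Ht).
  - intros; apply is_derive_ramp_int.
  - intros s Hs. apply ramp_low. lra.
Qed.

Lemma ramp_int_bounds (t : R) : p <= t -> 0 <= ramp_int t <= t - p.
Proof.
  intros Ht.
  pose proof (MVT_bounds ramp_int ramp p t 0 1 Ht (fun s _ => is_derive_ramp_int s)
    (fun s _ => ramp_bounds s)).
  pose proof (ramp_int_low p (Rle_refl p)). lra.
Qed.

Lemma ramp_int_lb (t : R) : p + w <= t -> t - p - w <= ramp_int t.
Proof.
  intros Ht.
  assert (H1 : forall s, p + w <= s <= t -> 1 <= ramp s <= 1)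
    by (intros s Hs; rewrite ramp_high; lra).
  pose proof (MVT_bounds ramp_int ramp (p + w) t 1 1 Ht (fun s _ => is_derive_ramp_int s) H1).
  pose proof (ramp_int_bounds (p + w)). lra.
Qed.

End Ramp.

Lemma at_right_0_pos : at_right 0 (fun d => 0 < d).
Proof. exists (mkposreal 1 Rlt_0_1). intros d _ Hd. exact Hd. Qed.

Lemma at_right_0_abs_lt (delta : posreal) : at_right 0 (fun d => Rabs d < delta).
Proof.
  exists delta. intros d Hd _. unfold ball in Hd; simpl in Hd.
  unfold AbsRing_ball, abs, minus, plus, opp in Hd; simpl in Hd.
  now rewrite Ropp_0, Rplus_0_r in Hd.
Qed.

Lemma at_right_0_mul_lt (K b : R) : 0 < b -> at_right 0 (fun d => d * K < b).
Proof.
  intros Hb. pose proof (Rabs_pos K).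
  assert (Hd : 0 < b / (Rabs K + 1)) by (apply Rdiv_lt_0_compat; lra).
  apply (filter_imp (fun d => Rabs d < mkposreal _ Hd /\ 0 < d));
    [|apply filter_and; [apply at_right_0_abs_lt|apply at_right_0_pos]].
  simpl. intros d [Hd1 Hd0]. rewrite Rabs_right in Hd1 by lra.
  apply Rle_lt_trans with (d * Rabs K); [apply Rmult_le_compat_l; [lra|apply Rle_abs]|].
  apply Rlt_le_trans with (b / (Rabs K + 1) * (Rabs K + 1)); [|right; field; lra].
  apply Rle_lt_trans with (b / (Rabs K + 1) * Rabs K); [apply Rmult_le_compat_r; lra|].
  apply Rmult_lt_compat_l; lra.
Qed.

Lemma at_right_0_continuous (g : R -> R) (x eps : R) : continuous g x -> 0 < eps ->
  at_right 0 (fun d => forall s, x - d <= s <= x + d -> Rabs (g s - g x) <= eps).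
Proof.
  intros Hg Heps. apply filterlim_locally with (eps := mkposreal eps Heps) in Hg.
  destruct Hg as [delta Hdelta].
  apply (filter_imp (fun d => Rabs d < delta)); [|apply at_right_0_abs_lt].
  intros d Hd s Hs. left. apply (Hdelta s).
  unfold ball; simpl; unfold AbsRing_ball, abs, minus, plus, opp; simpl.
  apply Rabs_lt_between'. apply Rabs_lt_between in Hd. lra.
Qed.

Lemma at_right_0_lt (b : R) : 0 < b -> at_right 0 (fun d => d < b).
Proof.
  intros Hb. apply (filter_imp (fun d => d * 1 < b)); [|now apply at_right_0_mul_lt].
  intros d. now rewrite Rmult_1_r.
Qed.

Lemma mul_le_of_bounds (x s a m : R) : 0 <= s <= m -> x <= a -> 0 <= a -> x * s <= a * m.
Proof. intros Hs Hx Ha. destruct (Rle_dec x 0); nra. Qed.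

Lemma abs_div_le (a d m d0 : R) : 0 < d0 -> d0 <= Rabs d -> Rabs a <= m -> Rabs (a / d) <= m / d0.
Proof.
  intros Hd0 Hd Ha. pose proof (Rabs_pos a).
  assert (d <> 0) by (intros ->; rewrite Rabs_R0 in Hd; lra).
  unfold Rdiv. rewrite Rabs_mult, Rabs_inv.
  apply Rmult_le_compat; [lra|left; apply Rinv_0_lt_compat; lra|exact Ha|].
  apply Rinv_le_contravar; lra.
Qed.

Lemma cut_mult_abs_le (phi z z0 t m : R) : 0 <= phi <= 1 -> Rabs (z - z0) <= t ->
  Rabs z0 + t <= m -> Rabs (phi * z) <= m.
Proof.
  intros Hphi Hz Hm. rewrite Rabs_mult, (Rabs_right phi) by lra.
  pose proof (Rabs_triang_inv z z0). pose proof (Rabs_pos z).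
  apply Rle_trans with (1 * Rabs z); [apply Rmult_le_compat_r|]; lra.
Qed.

(** * Positive scalar curvature of warped products *)

Lemma warped_scal_pos_iff (n : nat) (f : R -> R) (t : R) : (1 <= n)%nat -> 0 < f t ->
  0 < warped_scal n f t <->
  0 < (INR n - 1) * (1 - Derive f t ^ 2) - 2 * f t * Derive_n f 2 t.
Proof.
  intros Hn Hf.
  assert (Hc : 0 < INR n / f t ^ 2)
    by (apply Rdiv_lt_0_compat; [apply lt_0_INR; lia|apply pow_lt, Hf]).
  replace (warped_scal n f t)
    with (INR n / f t ^ 2 * ((INR n - 1) * (1 - Derive f t ^ 2) - 2 * f t * Derive_n f 2 t))
    by (unfold warped_scal; field; lra).
  split; intros H; [|now apply Rmult_lt_0_compat].
  apply (Rmult_lt_reg_l (INR n / f t ^ 2)); lra.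
Qed.

Lemma warped_scal_ext_loc (n : nat) (f g : R -> R) (t : R) :
  locally t (fun s => f s = g s) -> warped_scal n f t = warped_scal n g t.
Proof.
  intros H. unfold warped_scal.
  now rewrite (locally_singleton _ _ H), (Derive_ext_loc f g t H), (Derive_n_ext_loc f g 2 t H).
Qed.

(* [x], [y], [z] stand for f, f', f'' at a point and [s] for a cut-off factor in front of f''. *)
Definition psc_margin (N x0 y0 z0 t : R) : Prop :=
  forall x y z s, Rabs (x - x0) <= t -> Rabs (y - y0) <= t -> z <= z0 + t -> 0 <= s <= 1 ->
    0 < x /\ Rabs y < 1 /\ 0 < N * (1 - y ^ 2) - 2 * x * (s * z).

Lemma psc_margin_exists (N x0 y0 z0 : R) : 0 < N -> 0 < x0 -> Rabs y0 < 1 ->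
  0 < N * (1 - y0 ^ 2) - 2 * x0 * z0 ->
  exists t, 0 < t <= 1 /\ psc_margin N x0 y0 z0 t.
Proof.
  intros HN Hx0 Hy0 Hpsc.
  pose proof (Rmax_l z0 0). pose proof (Rmax_r z0 0). set (zp := Rmax z0 0) in *.
  assert (Hy02 : y0 ^ 2 < 1) by (rewrite <- (pow2_abs y0); pose proof (Rabs_pos y0); nra).
  set (h0 := N * (1 - y0 ^ 2) - 2 * x0 * zp).
  assert (Hh0 : 0 < h0).
  { unfold h0. destruct (Rle_dec z0 0).
    - replace zp with 0 by (unfold zp; rewrite Rmax_right; lra). nra.
    - replace zp with z0 by (unfold zp; rewrite Rmax_left; lra). lra. }
  (* the psc expression drops by at most [K t] under perturbations of size [t <= 1] *)
  set (K := 3 * N + 2 * (x0 + zp + 1)).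
  assert (HK : 0 < K) by (unfold K; lra).
  assert (Hsmall : at_right 0 (fun t => 0 < t /\ t < 1 /\ t < x0 / 2 /\
    t < (1 - Rabs y0) / 2 /\ t * K < h0 / 2)).
  { repeat apply filter_and; try apply at_right_0_lt; try apply at_right_0_mul_lt; try lra.
    apply at_right_0_pos. }
  destruct (filter_ex _ Hsmall) as (t & Ht & Ht1 & Htx & Hty & Htk).
  exists t. split; [lra|].
  intros x y z s Hx Hy Hz Hs.
  apply Rabs_le_between' in Hx.
  assert (Hya : Rabs y <= Rabs y0 + t).
  { pose proof (Rabs_triang (y - y0) y0). replace (y - y0 + y0) with y in * by ring. lra. }
  split; [lra|]. split; [lra|].
  assert (Hy2 : y ^ 2 <= y0 ^ 2 + 3 * t).
  { rewrite <- (pow2_abs y), <- (pow2_abs y0). pose proof (Rabs_pos y). pose proof (Rabs_pos y0).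
    assert (Rabs y ^ 2 <= (Rabs y0 + t) ^ 2) by (apply pow_incr; lra). nra. }
  assert (Hsz : s * z <= zp + t).
  { destruct (Rle_dec z 0); [|assert (s * z <= z)]; nra. }
  assert (Hxsz : x * (s * z) <= (x0 + t) * (zp + t)).
  { destruct (Rle_dec (s * z) 0); [|apply Rmult_le_compat]; nra. }
  unfold K in Htk. unfold h0 in *. nra.
Qed.

(** * The bridge *)

Section Glue.

(* [dl] is the width of the cut-off zones, [ta] and [tb] are psc margins at [b1] and
   [a2]; all conditions on [dl] below hold for every small enough [dl > 0]. *)
Variables (n : nat) (f1 f2 : R -> R) (b1 a2 e c w dl l0 ta tb : R).

Let N := INR n - 1.
Let D1 := Derive f1 b1.
Let D2 := Derive f2 a2.
Let C1 := Derive_n f1 2 b1.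
Let C2 := Derive_n f2 2 a2.
Let L := a2 - b1.
Let M := Rabs C1 + Rabs C2 + 1.
Let p1 := c - 2 * w.
Let p2 := c + w.
Let K := 4 * M * L / w.
Let tau := dl * (4 * M + K).
Let Dmax := Rmax D1 (- D2).
Let lo := b1 - e.
Let hi := a2 + e.

Hypothesis Hn : (2 <= n)%nat.
Hypothesis He : 0 < e.
Hypothesis Hf1 : smooth_in (b1 - e) (b1 + e) f1.
Hypothesis Hf2 : smooth_in (a2 - e) (a2 + e) f2.
Hypothesis Hf1pos : 0 < f1 b1.
Hypothesis Hf12 : f1 b1 < f2 a2.
Hypothesis HD1 : D1 < 1.
Hypothesis HD2 : -1 < D2.
Hypothesis HD12 : D2 <= D1.
Hypothesis Hw : 0 < w.
Hypothesis Hc : b1 + 3 * w <= c <= a2 - 3 * w.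
Hypothesis Hcc : f2 a2 - f1 b1 - D1 * L = (D2 - D1) * (a2 - c).
Hypothesis Hdl : 0 < dl <= w.
Hypothesis Hdle : dl < e.
Hypothesis Hta : ta <= 1.
Hypothesis Htb : tb <= 1.
Hypothesis Hmargin1 : psc_margin N (f1 b1) D1 C1 ta.
Hypothesis Hmargin2 : psc_margin N (f2 a2) D2 C2 tb.
Hypothesis Hcurv1 : forall s, b1 <= s <= b1 + dl -> Rabs (Derive_n f1 2 s - C1) <= ta.
Hypothesis Hcurv2 : forall s, a2 - dl <= s <= a2 -> Rabs (Derive_n f2 2 s - C2) <= tb.
Hypothesis Hdl_near1 : dl * (2 * M + Rabs D1 + 2 * L * M) < ta.
Hypothesis Hdl_near2 : dl * (M + 1) < tb.
Hypothesis Hdl_slope : tau < (1 - Dmax) / 2.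
Hypothesis Hdl_l0 : tau < D2 - l0.
Hypothesis Hdl_mid : dl * (2 * (f1 b1 + L) * K / (bump_mass * w)) < N * (1 - ((1 + Dmax) / 2) ^ 2).
Hypothesis Hdl_height : dl * (2 * L * M + K * L) < f1 b1 / 2.

Lemma layout : b1 + dl <= p1 /\ p1 + w <= p2 /\ p2 + w <= a2 - dl.
Proof. unfold p1, p2. lra. Qed.

Lemma M_ge : Rabs C1 + ta <= M /\ Rabs C2 + tb <= M.
Proof. unfold M. pose proof (Rabs_pos C1). pose proof (Rabs_pos C2). lra. Qed.

Lemma N_pos : 0 < N.
Proof. unfold N. pose proof (le_INR _ _ Hn) as H2. simpl in H2. lra. Qed.

Lemma M_pos : 0 < M.
Proof. unfold M. pose proof (Rabs_pos C1). pose proof (Rabs_pos C2). lra. Qed.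

Lemma L_pos : 0 < L.
Proof. unfold L. lra. Qed.

Lemma K_ge0 : 0 <= K.
Proof.
  unfold K. pose proof M_pos. pose proof L_pos.
  apply Rdiv_le_0_compat; [|lra]. apply Rmult_le_pos; lra.
Qed.

Definition cut1 (s : R) : R := 1 - ramp b1 dl s.
Definition cut2 (s : R) : R := ramp (a2 - dl) dl s.
Definition tail'' (s : R) : R := cut1 s * Derive_n f1 2 s + cut2 s * Derive_n f2 2 s.
Definition tail' (t : R) : R := RInt tail'' b1 t.
Definition tail (t : R) : R := RInt tail' b1 t.

Lemma cut1_bounds (s : R) : 0 <= cut1 s <= 1.
Proof. unfold cut1. pose proof (ramp_bounds b1 dl s). lra. Qed.

Lemma cut2_bounds (s : R) : 0 <= cut2 s <= 1.
Proof. apply ramp_bounds. Qed.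

Lemma cut1_low (s : R) : s <= b1 -> cut1 s = 1.
Proof. intros Hs. unfold cut1. rewrite ramp_low by lra. ring. Qed.

Lemma cut1_high (s : R) : b1 + dl <= s -> cut1 s = 0.
Proof. intros Hs. unfold cut1. rewrite ramp_high by lra. ring. Qed.

Lemma cut2_low (s : R) : s <= a2 - dl -> cut2 s = 0.
Proof. intros Hs. apply ramp_low; lra. Qed.

Lemma cut2_high (s : R) : a2 <= s -> cut2 s = 1.
Proof. intros Hs. apply ramp_high; lra. Qed.

Lemma smooth_cut1 : smooth cut1.
Proof.
  apply smooth_of_smooth_in. intros l r.
  apply smooth_in_ext with (fun s => 1 + -1 * ramp b1 dl s); [intros; unfold cut1; ring|].
  apply smooth_in_plus; [apply smooth_in_const|].
  apply smooth_in_scal, smooth_in_of_smooth, smooth_ramp. lra.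
Qed.

Lemma smooth_in_tail'' : smooth_in lo hi tail''.
Proof.
  pose proof layout. apply smooth_in_plus.
  - apply (smooth_in_mult_vanishing_right _ (b1 + dl) (b1 + e));
      [apply smooth_cut1|now apply smooth_in_Derive, smooth_in_Derive|lra|apply cut1_high].
  - apply (smooth_in_mult_vanishing_left _ (a2 - e) (a2 - dl));
      [apply smooth_ramp; lra|now apply smooth_in_Derive, smooth_in_Derive|lra|apply cut2_low].
Qed.

Lemma b1_in : lo < b1 < hi.
Proof. unfold lo, hi. lra. Qed.

Lemma bridge_in (t : R) : b1 <= t <= a2 -> lo < t < hi.
Proof. unfold lo, hi. lra. Qed.

Lemma is_derive_tail' (x : R) : lo < x < hi -> is_derive tail' x (tail'' x).
Proof.
  apply is_derive_RInt_in; [apply b1_in|].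
  intros z Hz. apply (continuous_of_smooth_in lo hi); [apply smooth_in_tail''|exact Hz].
Qed.

Lemma smooth_in_tail' : smooth_in lo hi tail'.
Proof.
  apply (smooth_in_of_is_derive _ _ _ tail''); [apply is_derive_tail'|apply smooth_in_tail''].
Qed.

Lemma is_derive_tail (x : R) : lo < x < hi -> is_derive tail x (tail' x).
Proof.
  apply is_derive_RInt_in; [apply b1_in|].
  intros z Hz. apply (continuous_of_smooth_in lo hi); [apply smooth_in_tail'|exact Hz].
Qed.

Lemma smooth_in_tail : smooth_in lo hi tail.
Proof.
  apply (smooth_in_of_is_derive _ _ _ tail'); [apply is_derive_tail|apply smooth_in_tail'].
Qed.

Lemma tail'_b1 : tail' b1 = 0.
Proof. apply (RInt_point (V := R_CompleteNormedModule)). Qed.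

Lemma tail_b1 : tail b1 = 0.
Proof. apply (RInt_point (V := R_CompleteNormedModule)). Qed.

Lemma tail''_left (s : R) : s <= b1 -> tail'' s = Derive_n f1 2 s.
Proof. intros Hs. unfold tail''. rewrite cut1_low, cut2_low by lra. ring. Qed.

Lemma tail''_near_b1 (s : R) : s <= b1 + dl -> tail'' s = cut1 s * Derive_n f1 2 s.
Proof. intros Hs. pose proof layout. unfold tail''. rewrite cut2_low by lra. ring. Qed.

Lemma tail''_mid (s : R) : b1 + dl <= s <= a2 - dl -> tail'' s = 0.
Proof. intros Hs. unfold tail''. rewrite cut1_high, cut2_low by lra. ring. Qed.

Lemma tail''_near_a2 (s : R) : a2 - dl <= s -> tail'' s = cut2 s * Derive_n f2 2 s.
Proof. intros Hs. pose proof layout. unfold tail''. rewrite cut1_high by lra. ring. Qed.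

Lemma tail''_right (s : R) : a2 <= s -> tail'' s = Derive_n f2 2 s.
Proof. intros Hs. rewrite tail''_near_a2, cut2_high by lra. ring. Qed.

Lemma tail''_bound (s : R) : b1 <= s <= a2 -> Rabs (tail'' s) <= M.
Proof.
  intros Hs. pose proof layout. pose proof M_ge. pose proof M_pos.
  destruct (Rle_dec s (b1 + dl)); [|destruct (Rle_dec (a2 - dl) s)].
  - rewrite tail''_near_b1 by lra.
    apply (cut_mult_abs_le _ _ C1 ta); [apply cut1_bounds|apply Hcurv1|]; lra.
  - rewrite tail''_near_a2 by lra.
    apply (cut_mult_abs_le _ _ C2 tb); [apply cut2_bounds|apply Hcurv2|]; lra.
  - rewrite tail''_mid, Rabs_R0 by lra. lra.
Qed.

Lemma tail'_mid (t : R) : b1 + dl <= t <= a2 - dl -> tail' t = tail' (b1 + dl).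
Proof.
  intros Ht. apply (eq_of_is_derive_zero _ tail''); [lra| |].
  - intros z Hz. apply is_derive_tail', bridge_in. pose proof layout. lra.
  - intros z Hz. apply tail''_mid. lra.
Qed.

Lemma tail'_bound (t : R) : b1 <= t <= a2 -> Rabs (tail' t) <= 2 * dl * M.
Proof.
  intros Ht. pose proof layout. pose proof M_pos.
  assert (Hlip : forall x y, b1 <= x <= y -> y <= a2 -> Rabs (tail' y - tail' x) <= M * (y - x)).
  { intros x y Hxy Hy. apply (MVT_abs_bound _ tail''); [lra| |].
    - intros z Hz. apply is_derive_tail', bridge_in. lra.
    - intros z Hz. apply tail''_bound. lra. }
  assert (Hleft : forall x, b1 <= x <= b1 + dl -> Rabs (tail' x) <= dl * M).
  { intros x Hx. specialize (Hlip b1 x ltac:(lra) ltac:(lra)). rewrite tail'_b1, Rminus_0_r in Hlip.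
    assert (M * (x - b1) <= M * dl) by (apply Rmult_le_compat_l; lra). lra. }
  assert (0 <= dl * M) by (apply Rmult_le_pos; lra).
  destruct (Rle_dec t (b1 + dl)); [|destruct (Rle_dec t (a2 - dl))].
  - pose proof (Hleft t ltac:(lra)). lra.
  - rewrite tail'_mid by lra. pose proof (Hleft (b1 + dl) ltac:(lra)). lra.
  - specialize (Hlip (a2 - dl) t ltac:(lra) ltac:(lra)).
    rewrite (tail'_mid (a2 - dl)) in Hlip by lra. pose proof (Hleft (b1 + dl) ltac:(lra)).
    pose proof (Rabs_triang_inv (tail' t) (tail' (b1 + dl))).
    assert (M * (t - (a2 - dl)) <= M * dl) by (apply Rmult_le_compat_l; lra). lra.
Qed.

Lemma tail_bound (t : R) : b1 <= t <= a2 -> Rabs (tail t) <= 2 * L * dl * M.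
Proof.
  intros Ht. pose proof M_pos.
  replace (tail t) with (tail t - tail b1) by (rewrite tail_b1; ring).
  apply Rle_trans with (2 * dl * M * (t - b1)).
  - apply (MVT_abs_bound _ tail'); [lra| |].
    + intros z Hz. apply is_derive_tail, bridge_in. lra.
    + intros z Hz. apply tail'_bound. lra.
  - unfold L. assert (0 <= 2 * dl * M) by nra.
    replace (2 * (a2 - b1) * dl * M) with (2 * dl * M * (a2 - b1)) by ring.
    apply Rmult_le_compat_l; lra.
Qed.

Let X1 := ramp_int p1 w a2.
Let X2 := ramp_int p2 w a2.

Lemma moments : a2 - c + w <= X1 <= L /\ 0 <= X2 <= a2 - c - w.
Proof.
  pose proof layout. unfold X1, X2, L.
  pose proof (ramp_int_bounds p1 w Hw a2 ltac:(lra)).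
  pose proof (ramp_int_lb p1 w Hw a2 ltac:(lra)).
  pose proof (ramp_int_bounds p2 w Hw a2 ltac:(lra)).
  unfold p1, p2 in *. lra.
Qed.

(* Cramer's rule for [x1 + x2 = s] and [x1 X1 + x2 X2 = r], whose determinant is [<= -2 w] *)
Definition coef1 (s r : R) : R := (s * X2 - r) / (X2 - X1).
Definition coef2 (s r : R) : R := (r - s * X1) / (X2 - X1).

Lemma coef_sum (s r : R) : coef1 s r + coef2 s r = s.
Proof. pose proof moments. unfold coef1, coef2. field. lra. Qed.

Lemma coef_moment (s r : R) : coef1 s r * X1 + coef2 s r * X2 = r.
Proof. pose proof moments. unfold coef1, coef2. field. lra. Qed.

Lemma coef1_sub (s r s' r' : R) : coef1 s r - coef1 s' r' = coef1 (s - s') (r - r').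
Proof. pose proof moments. unfold coef1. field. lra. Qed.

Lemma coef2_sub (s r s' r' : R) : coef2 s r - coef2 s' r' = coef2 (s - s') (r - r').
Proof. pose proof moments. unfold coef2. field. lra. Qed.

Lemma coef_bound (s r : R) :
  Rabs (coef1 s r) <= (Rabs s * L + Rabs r) / (2 * w) /\
  Rabs (coef2 s r) <= (Rabs s * L + Rabs r) / (2 * w).
Proof.
  pose proof moments. pose proof (Rabs_pos s).
  assert (Hdet : 2 * w <= Rabs (X2 - X1)) by (rewrite Rabs_left1; lra).
  assert (HX : Rabs (s * X2) <= Rabs s * L /\ Rabs (s * X1) <= Rabs s * L).
  { rewrite !Rabs_mult, (Rabs_right X1), (Rabs_right X2) by lra.
    split; apply Rmult_le_compat_l; lra. }
  split; apply abs_div_le; try lra;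
    unfold Rminus; (eapply Rle_trans; [apply Rabs_triang|]); rewrite Rabs_Ropp; lra.
Qed.

Definition P : R := coef1 (D2 - D1 - tail' a2) (f2 a2 - f1 b1 - D1 * L - tail a2).
Definition Q : R := coef2 (D2 - D1 - tail' a2) (f2 a2 - f1 b1 - D1 * L - tail a2).
(* the coefficients of the model, i.e. of the limit [dl -> 0] where the tails vanish *)
Definition P0 : R := coef1 (D2 - D1) ((D2 - D1) * (a2 - c)).
Definition Q0 : R := coef2 (D2 - D1) ((D2 - D1) * (a2 - c)).

Lemma model_coefs_nonpos : P0 <= 0 /\ Q0 <= 0.
Proof.
  pose proof moments. split.
  - replace P0 with ((D2 - D1) * ((a2 - c - X2) / (X1 - X2))) by (unfold P0, coef1; field; lra).
    apply Rmult_le_0_r; [lra|apply Rdiv_le_0_compat; lra].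
  - replace Q0 with ((D2 - D1) * ((X1 - (a2 - c)) / (X1 - X2))) by (unfold Q0, coef2; field; lra).
    apply Rmult_le_0_r; [lra|apply Rdiv_le_0_compat; lra].
Qed.

Lemma coef_error : Rabs (P - P0) + Rabs (Q - Q0) <= dl * K.
Proof.
  pose proof (tail'_bound a2 ltac:(lra)) as Hs. pose proof (tail_bound a2 ltac:(lra)) as Hr.
  assert (Hgap : f2 a2 - f1 b1 - D1 * L - tail a2 - (D2 - D1) * (a2 - c) = - tail a2)
    by (rewrite <- Hcc; ring).
  unfold P, P0, Q, Q0. rewrite coef1_sub, coef2_sub, Hgap.
  replace (D2 - D1 - tail' a2 - (D2 - D1)) with (- tail' a2) by ring.
  destruct (coef_bound (- tail' a2) (- tail a2)) as [H1 H2]. rewrite !Rabs_Ropp in H1, H2.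
  assert (Hnum : Rabs (tail' a2) * L + Rabs (tail a2) <= 4 * L * dl * M).
  { pose proof L_pos.
    assert (Rabs (tail' a2) * L <= 2 * dl * M * L) by (apply Rmult_le_compat_r; lra). lra. }
  assert (Hdiv : (Rabs (tail' a2) * L + Rabs (tail a2)) / (2 * w) <= 4 * L * dl * M / (2 * w)).
  { apply Rmult_le_compat_r; [left; apply Rinv_0_lt_compat; lra|exact Hnum]. }
  replace (dl * K) with (2 * (4 * L * dl * M / (2 * w))) by (unfold K; field; lra).
  lra.
Qed.

Lemma P_le : P <= Rabs (P - P0).
Proof. pose proof model_coefs_nonpos. pose proof (Rle_abs (P - P0)). lra. Qed.

Lemma Q_le : Q <= Rabs (Q - Q0).
Proof. pose proof model_coefs_nonpos. pose proof (Rle_abs (Q - Q0)). lra. Qed.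

Definition glue (t : R) : R :=
  f1 b1 + D1 * (t - b1) + tail t + P * ramp_int p1 w t + Q * ramp_int p2 w t.
Definition glue' (t : R) : R := D1 + tail' t + P * ramp p1 w t + Q * ramp p2 w t.
Definition glue'' (t : R) : R := tail'' t + P * ramp_slope p1 w t + Q * ramp_slope p2 w t.
Definition model (t : R) : R :=
  f1 b1 + D1 * (t - b1) + P0 * ramp_int p1 w t + Q0 * ramp_int p2 w t.
Definition model' (t : R) : R := D1 + P0 * ramp p1 w t + Q0 * ramp p2 w t.

Lemma is_derive_glue (x : R) : lo < x < hi -> is_derive glue x (glue' x).
Proof.
  intros Hx. pose proof (is_derive_tail x Hx) as Ht.
  pose proof (is_derive_ramp_int p1 w Hw x) as H1. pose proof (is_derive_ramp_int p2 w Hw x) as H2.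
  unfold glue, glue'. auto_derive.
  - refine (conj (ex_intro _ _ Ht) (conj (ex_intro _ _ H1) (conj (ex_intro _ _ H2) I))).
  - rewrite (is_derive_unique (fun y : R => tail y) _ _ Ht),
      (is_derive_unique (fun y : R => ramp_int p1 w y) _ _ H1),
      (is_derive_unique (fun y : R => ramp_int p2 w y) _ _ H2).
    ring.
Qed.

Lemma is_derive_glue' (x : R) : lo < x < hi -> is_derive glue' x (glue'' x).
Proof.
  intros Hx. pose proof (is_derive_tail' x Hx) as Ht.
  pose proof (is_derive_ramp p1 w Hw x) as H1. pose proof (is_derive_ramp p2 w Hw x) as H2.
  unfold glue', glue''. auto_derive.
  - refine (conj (ex_intro _ _ Ht) (conj (ex_intro _ _ H1) (conj (ex_intro _ _ H2) I))).
  - rewrite (is_derive_unique (fun y : R => tail' y) _ _ Ht),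
      (is_derive_unique (fun y : R => ramp p1 w y) _ _ H1),
      (is_derive_unique (fun y : R => ramp p2 w y) _ _ H2).
    ring.
Qed.

Lemma is_derive_model (x : R) : is_derive model x (model' x).
Proof.
  pose proof (is_derive_ramp_int p1 w Hw x) as H1. pose proof (is_derive_ramp_int p2 w Hw x) as H2.
  unfold model, model'. auto_derive.
  - refine (conj (ex_intro _ _ H1) (conj (ex_intro _ _ H2) I)).
  - rewrite (is_derive_unique (fun y : R => ramp_int p1 w y) _ _ H1),
      (is_derive_unique (fun y : R => ramp_int p2 w y) _ _ H2). ring.
Qed.

Lemma smooth_in_glue : smooth_in lo hi glue.
Proof.
  unfold glue.
  apply smooth_in_plus; [|apply smooth_in_scal, smooth_in_of_smooth, smooth_ramp_int, Hw].
  apply smooth_in_plus; [|apply smooth_in_scal, smooth_in_of_smooth, smooth_ramp_int, Hw].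
  apply smooth_in_plus; [|apply smooth_in_tail].
  apply smooth_in_plus; [apply smooth_in_const|].
  apply smooth_in_of_is_derive with (fun _ => D1); [|apply smooth_in_const].
  intros; auto_derive; [exact I|ring].
Qed.

Lemma is_derive_f1 (s : R) : lo < s < b1 + e ->
  is_derive f1 s (Derive f1 s) /\ is_derive (Derive f1) s (Derive_n f1 2 s).
Proof.
  intros Hs. unfold lo in Hs. split; apply (is_derive_of_smooth_in (b1 - e) (b1 + e));
    [exact Hf1|lra|apply smooth_in_Derive, Hf1|lra].
Qed.

Lemma is_derive_f2 (s : R) : a2 - e < s < hi ->
  is_derive f2 s (Derive f2 s) /\ is_derive (Derive f2) s (Derive_n f2 2 s).
Proof.
  intros Hs. unfold hi in Hs. split; apply (is_derive_of_smooth_in (a2 - e) (a2 + e));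
    [exact Hf2|lra|apply smooth_in_Derive, Hf2|lra].
Qed.

Lemma glue_b1 : glue b1 = f1 b1 /\ glue' b1 = D1.
Proof.
  pose proof layout. unfold glue, glue'.
  rewrite tail_b1, tail'_b1, (ramp_int_low p1 w Hw b1), (ramp_int_low p2 w Hw b1),
    (ramp_low p1 w Hw b1), (ramp_low p2 w Hw b1) by lra.
  split; ring.
Qed.

Lemma glue'_a2 : glue' a2 = D2.
Proof.
  pose proof layout. pose proof (coef_sum (D2 - D1 - tail' a2) (f2 a2 - f1 b1 - D1 * L - tail a2)).
  unfold glue'. rewrite (ramp_high p1 w Hw a2), (ramp_high p2 w Hw a2) by lra.
  fold P Q in *. lra.
Qed.

Lemma glue_a2 : glue a2 = f2 a2.
Proof.
  pose proof (coef_moment (D2 - D1 - tail' a2) (f2 a2 - f1 b1 - D1 * L - tail a2)).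
  unfold glue. fold P Q in *.
  change (ramp_int p1 w a2) with X1. change (ramp_int p2 w a2) with X2. unfold L in *. lra.
Qed.

Lemma is_derive2_glue (x : R) : lo < x < hi ->
  is_derive glue x (glue' x) /\ is_derive glue' x (glue'' x).
Proof. intros Hx. split; [apply is_derive_glue|apply is_derive_glue']; exact Hx. Qed.

Lemma glue_left (t : R) : lo < t <= b1 -> glue t = f1 t.
Proof.
  intros Ht. pose proof layout. destruct glue_b1 as [Hg Hg']. unfold lo in *.
  apply (eq_of_eq_second_derive glue f1 glue' (Derive f1) glue'' (Derive_n f1 2) t b1 b1 t);
    [lra|lra| | | |exact Hg'|exact Hg].
  - intros x Hx. apply is_derive2_glue. unfold lo, hi. lra.
  - intros x Hx. apply is_derive_f1. unfold lo. lra.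
  - intros x Hx. unfold glue''.
    rewrite tail''_left, (ramp_slope_out p1 w Hw x), (ramp_slope_out p2 w Hw x) by lra. ring.
Qed.

Lemma glue_right (t : R) : a2 <= t < hi -> glue t = f2 t.
Proof.
  intros Ht. pose proof layout. unfold hi in *.
  apply (eq_of_eq_second_derive glue f2 glue' (Derive f2) glue'' (Derive_n f2 2) a2 t a2 t);
    [lra|lra| | | |exact glue'_a2|exact glue_a2].
  - intros x Hx. apply is_derive2_glue. unfold lo, hi. lra.
  - intros x Hx. apply is_derive_f2. unfold hi. lra.
  - intros x Hx. unfold glue''.
    rewrite tail''_right, (ramp_slope_out p1 w Hw x), (ramp_slope_out p2 w Hw x) by lra. ring.
Qed.

Lemma glue'_bounds (t : R) : b1 <= t <= a2 -> D2 - tau <= glue' t <= D1 + tau.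
Proof.
  intros Ht. pose proof glue'_a2 as Ha2. unfold glue' in Ha2 |- *.
  pose proof layout. rewrite (ramp_high p1 w Hw a2), (ramp_high p2 w Hw a2) in Ha2 by lra.
  pose proof (tail'_bound t Ht) as Hgt. pose proof (tail'_bound a2 ltac:(lra)) as Hga.
  apply Rabs_le_between in Hgt. apply Rabs_le_between in Hga.
  pose proof coef_error. pose proof P_le. pose proof Q_le.
  pose proof (Rabs_pos (P - P0)). pose proof (Rabs_pos (Q - Q0)).
  pose proof (ramp_bounds p1 w t) as HS1. pose proof (ramp_bounds p2 w t) as HS2.
  assert (P * ramp p1 w t <= Rabs (P - P0) * 1) by (apply mul_le_of_bounds; lra).
  assert (Q * ramp p2 w t <= Rabs (Q - Q0) * 1) by (apply mul_le_of_bounds; lra).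
  assert (P * (1 - ramp p1 w t) <= Rabs (P - P0) * 1) by (apply mul_le_of_bounds; lra).
  assert (Q * (1 - ramp p2 w t) <= Rabs (Q - Q0) * 1) by (apply mul_le_of_bounds; lra).
  unfold tau. lra.
Qed.

Lemma glue'_abs (t : R) : b1 <= t <= a2 -> Rabs (glue' t) <= (1 + Dmax) / 2.
Proof.
  intros Ht. pose proof (glue'_bounds t Ht).
  pose proof (Rmax_l D1 (- D2)) as Hm1. pose proof (Rmax_r D1 (- D2)) as Hm2. fold Dmax in Hm1, Hm2.
  apply Rabs_le. lra.
Qed.

Lemma Dmax_lt1 : Dmax < 1.
Proof. apply Rmax_lub_lt; lra. Qed.

Lemma glue'_abs_lt1 (t : R) : b1 <= t <= a2 -> Rabs (glue' t) < 1.
Proof. intros Ht. pose proof (glue'_abs t Ht). pose proof Dmax_lt1. lra. Qed.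

Lemma ramp_int_on_bridge (p t : R) : b1 <= p -> b1 <= t <= a2 -> 0 <= ramp_int p w t <= L.
Proof.
  intros Hp Ht. unfold L. destruct (Rle_dec t p).
  - rewrite ramp_int_low by lra. lra.
  - pose proof (ramp_int_bounds p w Hw t ltac:(lra)). lra.
Qed.

Lemma model_ge (t : R) : b1 <= t <= a2 -> f1 b1 <= model t.
Proof.
  intros Ht. pose proof layout. pose proof model_coefs_nonpos.
  apply (ge_of_nonincreasing_derive model model' b1 a2);
    [exact Ht|intros; apply is_derive_model| | |].
  - intros x y Hxy Hy. unfold model'.
    pose proof (ramp_le p1 w Hw x y ltac:(lra)). pose proof (ramp_le p2 w Hw x y ltac:(lra)). nra.
  - unfold model. rewrite (ramp_int_low p1 w Hw b1), (ramp_int_low p2 w Hw b1) by lra. lra.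
  - pose proof (coef_moment (D2 - D1) ((D2 - D1) * (a2 - c))) as Hm. fold P0 Q0 in Hm.
    unfold model. change (ramp_int p1 w a2) with X1. change (ramp_int p2 w a2) with X2.
    fold L. lra.
Qed.

Lemma glue_near_model (t : R) : b1 <= t <= a2 ->
  Rabs (glue t - model t) <= dl * (2 * L * M + K * L).
Proof.
  intros Ht. pose proof layout. pose proof coef_error. pose proof L_pos.
  replace (glue t - model t)
    with (tail t + ((P - P0) * ramp_int p1 w t + (Q - Q0) * ramp_int p2 w t))
    by (unfold glue, model; ring).
  pose proof (tail_bound t Ht).
  pose proof (ramp_int_on_bridge p1 t ltac:(lra) Ht).
  pose proof (ramp_int_on_bridge p2 t ltac:(lra) Ht).
  assert (Rabs ((P - P0) * ramp_int p1 w t) <= Rabs (P - P0) * L).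
  { rewrite Rabs_mult, (Rabs_right (ramp_int _ _ _)) by lra.
    apply Rmult_le_compat_l; [apply Rabs_pos|lra]. }
  assert (Rabs ((Q - Q0) * ramp_int p2 w t) <= Rabs (Q - Q0) * L).
  { rewrite Rabs_mult, (Rabs_right (ramp_int _ _ _)) by lra.
    apply Rmult_le_compat_l; [apply Rabs_pos|lra]. }
  assert ((Rabs (P - P0) + Rabs (Q - Q0)) * L <= dl * K * L) by (apply Rmult_le_compat_r; lra).
  pose proof (Rabs_triang (tail t) ((P - P0) * ramp_int p1 w t + (Q - Q0) * ramp_int p2 w t)).
  pose proof (Rabs_triang ((P - P0) * ramp_int p1 w t) ((Q - Q0) * ramp_int p2 w t)).
  lra.
Qed.

Lemma glue_ge (t : R) : b1 <= t <= a2 -> f1 b1 / 2 <= glue t.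
Proof.
  intros Ht. pose proof (model_ge t Ht). pose proof (glue_near_model t Ht) as Hnear.
  apply Rabs_le_between in Hnear. lra.
Qed.

Lemma glue_le (t : R) : b1 <= t <= a2 -> glue t <= f1 b1 + L.
Proof.
  intros Ht. destruct glue_b1 as [Hb1 _]. rewrite <- Hb1.
  assert (H : Rabs (glue t - glue b1) <= 1 * (t - b1)).
  { apply (MVT_abs_bound _ glue'); [lra| |].
    - intros x Hx. apply is_derive_glue, bridge_in. lra.
    - intros x Hx. left. apply glue'_abs_lt1. lra. }
  apply Rabs_le_between in H. unfold L. lra.
Qed.

Lemma glue_psc_left (t : R) : b1 <= t <= b1 + dl ->
  0 < N * (1 - glue' t ^ 2) - 2 * glue t * glue'' t.
Proof.
  intros Ht. pose proof layout. pose proof M_pos. pose proof L_pos.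
  assert (Hg : glue t = f1 b1 + D1 * (t - b1) + tail t).
  { unfold glue. rewrite (ramp_int_low p1 w Hw t), (ramp_int_low p2 w Hw t) by lra. ring. }
  assert (Hg' : glue' t = D1 + tail' t).
  { unfold glue'. rewrite (ramp_low p1 w Hw t), (ramp_low p2 w Hw t) by lra. ring. }
  assert (Hg'' : glue'' t = cut1 t * Derive_n f1 2 t).
  { unfold glue''. rewrite tail''_near_b1, (ramp_slope_out p1 w Hw t), (ramp_slope_out p2 w Hw t)
      by lra. ring. }
  pose proof (tail_bound t ltac:(lra)) as Htail. pose proof (tail'_bound t ltac:(lra)) as Htail'.
  assert (0 <= dl * Rabs D1) by (apply Rmult_le_pos; [lra|apply Rabs_pos]).
  assert (0 <= dl * (L * M)) by (apply Rmult_le_pos; [|apply Rmult_le_pos]; lra).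
  assert (0 <= dl * M) by (apply Rmult_le_pos; lra).
  rewrite Hg''. apply (Hmargin1 (glue t) (glue' t) (Derive_n f1 2 t) (cut1 t)).
  - rewrite Hg.
    replace (f1 b1 + D1 * (t - b1) + tail t - f1 b1) with (D1 * (t - b1) + tail t) by ring.
    eapply Rle_trans; [apply Rabs_triang|]. rewrite Rabs_mult, (Rabs_right (t - b1)) by lra.
    assert (Rabs D1 * (t - b1) <= Rabs D1 * dl) by (apply Rmult_le_compat_l; [apply Rabs_pos|lra]).
    lra.
  - rewrite Hg'. replace (D1 + tail' t - D1) with (tail' t) by ring. lra.
  - pose proof (Hcurv1 t Ht) as Hc1. apply Rabs_le_between' in Hc1. lra.
  - apply cut1_bounds.
Qed.

Lemma glue_psc_right (t : R) : a2 - dl <= t <= a2 ->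
  0 < N * (1 - glue' t ^ 2) - 2 * glue t * glue'' t.
Proof.
  intros Ht. pose proof layout. pose proof M_pos.
  assert (Hg'' : forall x, a2 - dl <= x -> glue'' x = cut2 x * Derive_n f2 2 x).
  { intros x Hx. unfold glue''.
    rewrite tail''_near_a2, (ramp_slope_out p1 w Hw x), (ramp_slope_out p2 w Hw x) by lra. ring. }
  assert (Hslope : Rabs (glue' a2 - glue' t) <= M * (a2 - t)).
  { apply (MVT_abs_bound _ glue''); [lra| |].
    - intros x Hx. apply is_derive_glue', bridge_in. lra.
    - intros x Hx. rewrite Hg'' by lra. rewrite <- tail''_near_a2 by lra. apply tail''_bound. lra. }
  assert (Hheight_a2 : Rabs (glue a2 - glue t) <= 1 * (a2 - t)).
  { apply (MVT_abs_bound _ glue'); [lra| |].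
    - intros x Hx. apply is_derive_glue, bridge_in. lra.
    - intros x Hx. left. apply glue'_abs_lt1. lra. }
  rewrite glue'_a2 in Hslope. rewrite glue_a2 in Hheight_a2.
  rewrite Hg'' by lra. apply (Hmargin2 (glue t) (glue' t) (Derive_n f2 2 t) (cut2 t)).
  - rewrite Rabs_minus_sym. assert (a2 - t <= dl) by lra. nra.
  - rewrite Rabs_minus_sym. assert (M * (a2 - t) <= M * dl) by (apply Rmult_le_compat_l; lra). nra.
  - pose proof (Hcurv2 t Ht) as Hc2. apply Rabs_le_between' in Hc2. lra.
  - apply cut2_bounds.
Qed.

Lemma glue_psc_mid (t : R) : b1 + dl <= t <= a2 - dl ->
  0 < N * (1 - glue' t ^ 2) - 2 * glue t * glue'' t.
Proof.
  intros Ht. pose proof layout. pose proof coef_error. pose proof P_le. pose proof Q_le.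
  pose proof K_ge0. pose proof L_pos. pose proof bump_mass_pos.
  set (bmax := / (bump_mass * w)).
  assert (Hbmax : 0 < bmax) by (apply Rinv_0_lt_compat, Rmult_lt_0_compat; lra).
  assert (Hcurv : glue'' t <= dl * K * bmax).
  { unfold glue''. rewrite tail''_mid by lra.
    pose proof (ramp_slope_bounds p1 w Hw t) as Hb1.
    pose proof (ramp_slope_bounds p2 w Hw t) as Hb2.
    fold bmax in Hb1, Hb2.
    assert (P * ramp_slope p1 w t <= Rabs (P - P0) * bmax)
      by (apply mul_le_of_bounds; [exact Hb1|lra|apply Rabs_pos]).
    assert (Q * ramp_slope p2 w t <= Rabs (Q - Q0) * bmax)
      by (apply mul_le_of_bounds; [exact Hb2|lra|apply Rabs_pos]).
    assert ((Rabs (P - P0) + Rabs (Q - Q0)) * bmax <= dl * K * bmax)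
      by (apply Rmult_le_compat_r; lra).
    lra. }
  pose proof (glue_ge t ltac:(lra)). pose proof (glue_le t ltac:(lra)).
  assert (Hprod : glue'' t * glue t <= dl * K * bmax * (f1 b1 + L))
    by (apply mul_le_of_bounds; [lra|exact Hcurv|]; apply Rmult_le_pos; [apply Rmult_le_pos|]; lra).
  pose proof (glue'_abs t ltac:(lra)) as Habs. pose proof Dmax_lt1.
  assert (Hsq : glue' t ^ 2 <= ((1 + Dmax) / 2) ^ 2).
  { rewrite <- (pow2_abs (glue' t)). apply pow_incr. split; [apply Rabs_pos|exact Habs]. }
  pose proof N_pos.
  assert (N * ((1 + Dmax) / 2) ^ 2 >= N * glue' t ^ 2) by (apply Rle_ge, Rmult_le_compat_l; lra).
  replace (dl * (2 * (f1 b1 + L) * K / (bump_mass * w))) with (2 * ((f1 b1 + L) * (dl * K * bmax)))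
    in Hdl_mid by (unfold bmax; field; lra).
  lra.
Qed.

Lemma glue_psc (t : R) : b1 <= t <= a2 -> 0 < N * (1 - glue' t ^ 2) - 2 * glue t * glue'' t.
Proof.
  intros Ht. destruct (Rle_dec t (b1 + dl)); [|destruct (Rle_dec (a2 - dl) t)].
  - apply glue_psc_left. lra.
  - apply glue_psc_right. lra.
  - apply glue_psc_mid. lra.
Qed.

Lemma glue_spec : exists F : R -> R,
  smooth_in (b1 - e) (a2 + e) F /\
  (forall t, b1 - e < t <= b1 -> F t = f1 t) /\
  (forall t, a2 <= t < a2 + e -> F t = f2 t) /\
  (forall t, b1 <= t <= a2 -> 0 < F t /\ 0 < warped_scal n F t /\ l0 < Derive F t).
Proof.
  exists glue.
  split; [exact smooth_in_glue|]. split; [exact glue_left|]. split; [exact glue_right|].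
  intros t Ht. pose proof (bridge_in t Ht) as Hin.
  assert (Hd1 : Derive glue t = glue' t) by (apply is_derive_unique, is_derive_glue, Hin).
  assert (Hd2 : Derive_n glue 2 t = glue'' t).
  { change (Derive (Derive glue) t = glue'' t).
    rewrite (Derive_ext_loc (Derive glue) glue' t).
    - apply is_derive_unique, is_derive_glue', Hin.
    - apply (locally_eq_in lo hi); [exact Hin|].
      intros y Hy. apply is_derive_unique, is_derive_glue, Hy. }
  pose proof (glue_ge t Ht). pose proof (glue'_bounds t Ht).
  split; [lra|]. split.
  - apply warped_scal_pos_iff; [lia|lra|]. rewrite Hd1, Hd2. apply glue_psc, Ht.
  - rewrite Hd1. lra.
Qed.

End Glue.

Lemma glue_exists (n : nat) (f1 f2 : R -> R) (b1 a2 c e l0 : R) :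
  (2 <= n)%nat -> 0 < e ->
  smooth_in (b1 - e) (b1 + e) f1 -> smooth_in (a2 - e) (a2 + e) f2 ->
  0 < f1 b1 -> f1 b1 < f2 a2 ->
  -1 < Derive f2 a2 -> Derive f2 a2 <= Derive f1 b1 -> Derive f1 b1 < 1 ->
  b1 < c < a2 ->
  f2 a2 - f1 b1 - Derive f1 b1 * (a2 - b1) = (Derive f2 a2 - Derive f1 b1) * (a2 - c) ->
  0 < warped_scal n f1 b1 -> 0 < warped_scal n f2 a2 -> l0 < Derive f2 a2 ->
  exists F : R -> R,
    smooth_in (b1 - e) (a2 + e) F /\
    (forall t, b1 - e < t <= b1 -> F t = f1 t) /\
    (forall t, a2 <= t < a2 + e -> F t = f2 t) /\
    (forall t, b1 <= t <= a2 -> 0 < F t /\ 0 < warped_scal n F t /\ l0 < Derive F t).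
Proof.
  intros Hn He Hf1 Hf2 Hpos1 Hf12 HD2 HD12 HD1 Hc Hcc Hpsc1 Hpsc2 Hl0.
  set (D1 := Derive f1 b1) in *. set (D2 := Derive f2 a2) in *.
  set (C1 := Derive_n f1 2 b1). set (C2 := Derive_n f2 2 a2).
  assert (HN : 0 < INR n - 1) by (pose proof (le_INR _ _ Hn) as H2; simpl in H2; lra).
  apply warped_scal_pos_iff in Hpsc1; [|lia|exact Hpos1].
  apply warped_scal_pos_iff in Hpsc2; [|lia|lra].
  destruct (psc_margin_exists _ (f1 b1) D1 C1 HN Hpos1 ltac:(apply Rabs_lt_between; lra) Hpsc1)
    as (ta & Hta & Hmargin1).
  destruct (psc_margin_exists _ (f2 a2) D2 C2 HN ltac:(lra) ltac:(apply Rabs_lt_between; lra) Hpsc2)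
    as (tb & Htb & Hmargin2).
  set (w := Rmin (c - b1) (a2 - c) / 3).
  assert (Hw : 0 < w /\ b1 + 3 * w <= c <= a2 - 3 * w).
  { unfold w. pose proof (Rmin_l (c - b1) (a2 - c)). pose proof (Rmin_r (c - b1) (a2 - c)).
    pose proof (Rmin_glb_lt (c - b1) (a2 - c) 0). lra. }
  set (L := a2 - b1). set (M := Rabs C1 + Rabs C2 + 1). set (K := 4 * M * L / w).
  set (Dmax := Rmax D1 (- D2)).
  assert (HDmax : -1 < Dmax < 1).
  { unfold Dmax. split; [pose proof (Rmax_l D1 (- D2))|apply Rmax_lub_lt]; lra. }
  assert (Hgap : 0 < (INR n - 1) * (1 - ((1 + Dmax) / 2) ^ 2)).
  { apply Rmult_lt_0_compat; [exact HN|]. assert (0 < (1 + Dmax) / 2 < 1) by lra. nra. }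
  assert (Hsmall : at_right 0 (fun dl => 0 < dl /\ dl < w /\ dl < e /\
    (forall s, b1 - dl <= s <= b1 + dl -> Rabs (Derive_n f1 2 s - C1) <= ta) /\
    (forall s, a2 - dl <= s <= a2 + dl -> Rabs (Derive_n f2 2 s - C2) <= tb) /\
    dl * (2 * M + Rabs D1 + 2 * L * M) < ta /\ dl * (M + 1) < tb /\
    dl * (4 * M + K) < (1 - Dmax) / 2 /\ dl * (4 * M + K) < D2 - l0 /\
    dl * (2 * (f1 b1 + L) * K / (bump_mass * w)) < (INR n - 1) * (1 - ((1 + Dmax) / 2) ^ 2) /\
    dl * (2 * L * M + K * L) < f1 b1 / 2)).
  { repeat apply filter_and; try apply at_right_0_lt; try apply at_right_0_mul_lt; try lra;
      [apply at_right_0_pos|apply at_right_0_continuous; [|lra]..];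
      [apply (continuous_Derive2_of_smooth_in (b1 - e) (b1 + e))|
       apply (continuous_Derive2_of_smooth_in (a2 - e) (a2 + e))]; (assumption || lra). }
  destruct (filter_ex _ Hsmall) as (dl & Hdl & Hdlw & Hdle & Hcurv1 & Hcurv2 & Hnear1 & Hnear2 &
    Hslope & HslopeL0 & Hmid & Hheight).
  apply (glue_spec n f1 f2 b1 a2 e c w dl l0 ta tb); try lra; try assumption.
  - intros s Hs. apply Hcurv1. lra.
  - intros s Hs. apply Hcurv2. lra.
Qed.

(* [c] is where the tangent lines [y1 + d1 (t - b1)] and [y2 + d2 (t - a2)] meet *)
Lemma tangents_meet (b1 a2 y1 y2 d1 d2 : R) : 0 < d1 -> d2 <= d1 -> y1 < y2 ->
  (d1 = d2 -> (a2 - b1) * d1 = y2 - y1) ->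
  (d2 < d1 -> (a2 - b1) * d1 > y2 - y1 /\ y2 - y1 > (a2 - b1) * d2) ->
  exists c, b1 < c < a2 /\ y2 - y1 - d1 * (a2 - b1) = (d2 - d1) * (a2 - c).
Proof.
  intros Hd1 Hd12 Hy Heq Hlt. destruct (Req_dec d1 d2) as [E|E].
  - specialize (Heq E). assert (b1 < a2) by nra.
    exists ((b1 + a2) / 2). split; [lra|]. rewrite <- E. lra.
  - destruct (Hlt ltac:(lra)) as [H1 H2].
    set (q := (y2 - y1 - d1 * (a2 - b1)) / (d2 - d1)).
    assert (Hq : q * (d1 - d2) = - (y2 - y1 - d1 * (a2 - b1))) by (unfold q; field; lra).
    assert (0 < q) by (apply (Rmult_lt_reg_r (d1 - d2)); lra).
    assert (q < a2 - b1) by (apply (Rmult_lt_reg_r (d1 - d2)); lra).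
    exists (a2 - q). split; [lra|]. unfold q. field. lra.
Qed.

Definition splice (f1 F f2 : R -> R) (b1 a2 t : R) : R :=
  if Rle_dec t b1 then f1 t else if Rle_dec t a2 then F t else f2 t.

Lemma splice_spec (n : nat) (a1 b1 a2 b2 e l0 : R) (f1 F f2 : R -> R) :
  0 < e -> b1 < a2 ->
  smooth_in (a1 - e) (b1 + e) f1 -> smooth_in (a2 - e) (b2 + e) f2 ->
  positive_on a1 b1 f1 -> positive_on a2 b2 f2 -> psc_on n a1 b1 f1 -> psc_on n a2 b2 f2 ->
  smooth_in (b1 - e) (a2 + e) F ->
  (forall t, b1 - e < t <= b1 -> F t = f1 t) ->
  (forall t, a2 <= t < a2 + e -> F t = f2 t) ->
  (forall t, b1 <= t <= a2 -> 0 < F t /\ 0 < warped_scal n F t /\ l0 < Derive F t) ->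
  exists f : R -> R,
    smooth_on a1 b2 f /\ positive_on a1 b2 f /\
    (forall t, t <= b1 -> f t = f1 t) /\
    (forall t, a2 <= t -> f t = f2 t) /\
    psc_on n a1 b2 f /\
    (forall t, t < b1 -> Derive f t = Derive f1 t) /\
    (forall t, b1 <= t <= a2 -> l0 < Derive f t) /\
    (forall t, a2 < t -> Derive f t = Derive f2 t).
Proof.
  intros He Hba Hf1 Hf2 Hpos1 Hpos2 Hpsc1 Hpsc2 HF HF1 HF2 HFpsc.
  set (f := splice f1 F f2 b1 a2).
  assert (Ef1 : forall t, t <= b1 -> f1 t = f t).
  { intros t Ht. unfold f, splice. destruct (Rle_dec t b1); [reflexivity|lra]. }
  assert (EF : forall t, b1 - e < t < a2 + e -> F t = f t).
  { intros t Ht. unfold f, splice. destruct (Rle_dec t b1); [apply HF1; lra|].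
    destruct (Rle_dec t a2); [reflexivity|apply HF2; lra]. }
  assert (Ef2 : forall t, a2 <= t -> f2 t = f t).
  { intros t Ht. unfold f, splice. destruct (Rle_dec t b1); [lra|].
    destruct (Rle_dec t a2); [|reflexivity]. replace t with a2 by lra. symmetry. apply HF2. lra. }
  assert (Lf1 : forall t, t < b1 -> locally t (fun s => f1 s = f s))
    by (intros t Ht; apply (locally_eq_in (t - 1) b1); [lra|intros s Hs; apply Ef1; lra]).
  assert (LF : forall t, b1 - e < t < a2 + e -> locally t (fun s => F s = f s))
    by (intros t Ht; apply (locally_eq_in (b1 - e) (a2 + e)); [exact Ht|exact EF]).
  assert (Lf2 : forall t, a2 < t -> locally t (fun s => f2 s = f s))
    by (intros t Ht; apply (locally_eq_in a2 (t + 1)); [lra|intros s Hs; apply Ef2; lra]).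
  exists f. split; [|split; [|split; [|split; [|split; [|split; [|split]]]]]].
  - exists e. split; [exact He|]. intros k x Hx.
    destruct (Rlt_dec x b1); [|destruct (Rle_dec x a2)].
    + apply ex_derive_n_ext_loc with f1; [apply Lf1; lra|apply Hf1; lra].
    + apply ex_derive_n_ext_loc with F; [apply LF; lra|apply HF; lra].
    + apply ex_derive_n_ext_loc with f2; [apply Lf2; lra|apply Hf2; lra].
  - intros t Ht. destruct (Rlt_dec t b1); [|destruct (Rle_dec t a2)].
    + rewrite <- Ef1 by lra. apply Hpos1. lra.
    + rewrite <- EF by lra. apply HFpsc. lra.
    + rewrite <- Ef2 by lra. apply Hpos2. lra.
  - intros t Ht. symmetry. apply Ef1, Ht.
  - intros t Ht. symmetry. apply Ef2, Ht.
  - intros t Ht. destruct (Rlt_dec t b1); [|destruct (Rle_dec t a2)].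
    + rewrite <- (warped_scal_ext_loc n f1 f t) by (apply Lf1; lra). apply Hpsc1. lra.
    + rewrite <- (warped_scal_ext_loc n F f t) by (apply LF; lra). apply HFpsc. lra.
    + rewrite <- (warped_scal_ext_loc n f2 f t) by (apply Lf2; lra). apply Hpsc2. lra.
  - intros t Ht. symmetry. apply Derive_ext_loc, Lf1, Ht.
  - intros t Ht. rewrite <- (Derive_ext_loc F f t) by (apply LF; lra). apply HFpsc, Ht.
  - intros t Ht. symmetry. apply Derive_ext_loc, Lf2, Ht.
Qed.

Lemma psc_bridge (n : nat) (a1 b1 a2 b2 : R) (f1 f2 : R -> R) (l0 : R) :
  (2 <= n)%nat -> a1 < b1 -> a2 < b2 ->
  smooth_on a1 b1 f1 -> positive_on a1 b1 f1 ->
  smooth_on a2 b2 f2 -> positive_on a2 b2 f2 ->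
  psc_on n a1 b1 f1 -> psc_on n a2 b2 f2 ->
  f1 b1 < f2 a2 ->
  Derive f1 b1 < 1 -> 0 < Derive f1 b1 ->
  Derive f2 a2 <= Derive f1 b1 -> -1 < Derive f2 a2 ->
  (Derive f1 b1 = Derive f2 a2 -> (a2 - b1) * Derive f1 b1 = f2 a2 - f1 b1) ->
  (Derive f2 a2 < Derive f1 b1 ->
     (a2 - b1) * Derive f1 b1 > f2 a2 - f1 b1 /\ f2 a2 - f1 b1 > (a2 - b1) * Derive f2 a2) ->
  l0 < Derive f2 a2 ->
  exists f : R -> R,
    smooth_on a1 b2 f /\ positive_on a1 b2 f /\
    (forall t, t <= b1 -> f t = f1 t) /\
    (forall t, a2 <= t -> f t = f2 t) /\
    psc_on n a1 b2 f /\
    (forall t, t < b1 -> Derive f t = Derive f1 t) /\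
    (forall t, b1 <= t <= a2 -> l0 < Derive f t) /\
    (forall t, a2 < t -> Derive f t = Derive f2 t).
Proof.
  intros Hn Hab1 Hab2 [eps1 [Heps1 Hs1]] Hpos1 [eps2 [Heps2 Hs2]] Hpos2 Hpsc1 Hpsc2 Hf
    HD1 HD1' HD12 HD2 Heq Hlt Hl0.
  destruct (tangents_meet b1 a2 (f1 b1) (f2 a2) (Derive f1 b1) (Derive f2 a2))
    as (c & Hc & Hcc); try assumption.
  assert (Hsmall : at_right 0
    (fun e => 0 < e /\ e < eps1 /\ e < eps2 /\ e < b1 - a1 /\ e < b2 - a2))
    by (repeat apply filter_and; try apply at_right_0_lt; try lra; apply at_right_0_pos).
  destruct (filter_ex _ Hsmall) as (e & He & He1 & He2 & He3 & He4).
  destruct (glue_exists n f1 f2 b1 a2 c e l0) as (F & HF & HF1 & HF2 & HFpsc); try assumption.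
  - intros k x Hx. apply Hs1. lra.
  - intros k x Hx. apply Hs2. lra.
  - apply Hpos1. lra.
  - apply Hpsc1. lra.
  - apply Hpsc2. lra.
  - apply (splice_spec n a1 b1 a2 b2 e l0 f1 F f2); try assumption; [lra| |].
    + intros k x Hx. apply Hs1. lra.
    + intros k x Hx. apply Hs2. lra.
Qed.

Theorem lemma2p1 (n : nat) (a1 b1 a2 b2 : R) (f1 f2 : R -> R) :
  (2 <= n)%nat ->
  a1 < b1 -> a2 < b2 ->
  smooth_on a1 b1 f1 -> positive_on a1 b1 f1 ->
  smooth_on a2 b2 f2 -> positive_on a2 b2 f2 ->
  (* (i) *)
  psc_on n a1 b1 f1 -> psc_on n a2 b2 f2 ->
  (* (ii) *)
  f1 b1 < f2 a2 ->
  (* (iii) *)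
  Derive f1 b1 < 1 -> 0 < Derive f1 b1 ->
  Derive f2 a2 <= Derive f1 b1 -> -1 < Derive f2 a2 ->
  (* the intervals have been translated as prescribed *)
  (Derive f1 b1 = Derive f2 a2 ->
     (a2 - b1) * Derive f1 b1 = f2 a2 - f1 b1) ->
  (Derive f2 a2 < Derive f1 b1 ->
     (a2 - b1) * Derive f1 b1 > f2 a2 - f1 b1 /\
     f2 a2 - f1 b1 > (a2 - b1) * Derive f2 a2) ->
  (exists f : R -> R,
     smooth_on a1 b2 f /\ positive_on a1 b2 f /\
     (forall t, a1 <= t <= (a1 + b1) / 2 -> f t = f1 t) /\
     (forall t, (a2 + b2) / 2 <= t <= b2 -> f t = f2 t) /\
     psc_on n a1 b2 f)
  /\
  ((forall t, a1 <= t <= b1 -> 0 < Derive f1 t) ->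
   (forall t, a2 <= t <= b2 -> 0 < Derive f2 t) ->
   exists f : R -> R,
     smooth_on a1 b2 f /\ positive_on a1 b2 f /\
     (forall t, a1 <= t <= (a1 + b1) / 2 -> f t = f1 t) /\
     (forall t, (a2 + b2) / 2 <= t <= b2 -> f t = f2 t) /\
     psc_on n a1 b2 f /\
     (forall t, a1 <= t <= b2 -> 0 < Derive f t)).
Proof.
  intros Hn Hab1 Hab2 Hs1 Hp1 Hs2 Hp2 Hc1 Hc2 Hf HD1 HD1' HD12 HD2 Heq Hlt.
  split.
  - destruct (psc_bridge n a1 b1 a2 b2 f1 f2 (Derive f2 a2 - 1))
      as (f & Hs & Hp & Hl & Hr & Hpsc & _);
      try assumption; [lra|].
    exists f. repeat split; try assumption; intros t Ht; [apply Hl|apply Hr]; lra.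
  - intros Hd1 Hd2.
    destruct (psc_bridge n a1 b1 a2 b2 f1 f2 0)
      as (f & Hs & Hp & Hl & Hr & Hpsc & Hdl & Hdm & Hdr); try assumption; [apply Hd2; lra|].
    exists f. repeat split; try assumption;
      [intros t Ht; apply Hl; lra|intros t Ht; apply Hr; lra|].
    intros t Ht. destruct (Rlt_dec t b1); [|destruct (Rle_dec t a2)].
    + rewrite Hdl by lra. apply Hd1. lra.
    + apply Hdm. lra.
    + rewrite Hdr by lra. apply Hd2. lra.
Qed.
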